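(* Let $0<q<1$ and $\nu\in\mathbb{R}$. Define, for $z\in\mathbb{C}\setminus(-\infty,0]$ (principal branches of powers), $$I_\nu^{(3)}((1-q^2)z;q^2)=\sum_{k=0}^\infty\frac{q^{k(\nu+k)}(1-q^2)^k(z/2)^{\nu+2k}}{(q^2;q^2)_k\,\Gamma_{q^2}(\nu+k+1)},$$ and, for non-integer $\nu$, $$K_\nu^{(3)}((1-q^2)z;q^2)=\tfrac12 q^{-\nu^2+\nu}\Gamma_{q^2}(\nu)\Gamma_{q^2}(1-\nu)\left[I_{-\nu}^{(3)}((1-q^2)z;q^2)-I_\nu^{(3)}((1-q^2)z;q^2)\right],$$ extended to integer $\nu=n$ by taking the limit $\nu\to n$. Then $$q^{-\nu/2}K_{\nu-1}^{(3)}((1-q^2)z;q^2)-q^{\nu/2}K_{\nu+1}^{(3)}((1-q^2)z;q^2)=-\frac{2}{(1-q^2)z}(q^{-\nu}-q^\nu)K_\nu^{(3)}((1-q^2)q^{1/2}z;q^2),$$ $$q^{-\nu/2}K_{\nu-1}^{(3)}((1-q^2)z;q^2)+q^{\nu/2}K_{\nu+1}^{(3)}((1-q^2)z;q^2)=-\frac{4}{(1-q^2)z}K_\nu^{(3)}((1-q^2)q^{-1/2}z;q^2)+\frac{2}{(1-q^2)z}(q^{-\nu}+q^\nu)K_\nu^{(3)}((1-q^2)q^{1/2}z;q^2).$$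
   Context: $(a;q)_k=\prod_{j=0}^{k-1}(1-aq^j)$, $(a;q)_\infty=\prod_{j\ge0}(1-aq^j)$. The $q$-Gamma function is $\Gamma_{q}(x)=\frac{(q;q)_\infty}{(q^x;q)_\infty}(1-q)^{1-x}$, used here with base $q^2$. *)

From Stdlib Require Import Reals ZArith ClassicalEpsilon.
From Coquelicot Require Import Coquelicot.
Open Scope R_scope.

Fixpoint qPoch (a q : R) (k : nat) : R :=
  match k with
  | O => 1
  | S k' => qPoch a q k' * (1 - a * q ^ k')
  end.

Definition qPochInf (a q : R) : R := real (Lim_seq (fun n => qPoch a q n)).

Definition qGamma (b x : R) : R :=
  qPochInf b b / qPochInf (Rpower b x) b * Rpower (1 - b) (1 - x).

(* principal argument on C \ (-oo,0]  (half-angle formula, in (-pi,pi)) *)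
Definition Carg (w : C) : R := 2 * atan (Im w / (Cmod w + Re w)).

Definition Cpowr (w : C) (a : R) : C :=
  (Rpower (Cmod w) a * cos (a * Carg w), Rpower (Cmod w) a * sin (a * Carg w)).

Definition I3_term (q nu : R) (z : C) (k : nat) : C :=
  Cmult (RtoC (Rpower q (INR k * (nu + INR k)) * (1 - q ^ 2) ^ k
               / (qPoch (q ^ 2) (q ^ 2) k * qGamma (q ^ 2) (nu + INR k + 1))))
        (Cpowr (Cdiv z (RtoC 2)) (nu + 2 * INR k)).

(* I3 q nu z  stands for  I_nu^{(3)}((1-q^2) z; q^2)  (series summed componentwise) *)
Definition I3 (q nu : R) (z : C) : C :=
  (Series (fun k => Re (I3_term q nu z k)), Series (fun k => Im (I3_term q nu z k))).

Definition K3_nonint (q nu : R) (z : C) : C :=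
  Cmult (RtoC (/ 2 * Rpower q (- nu ^ 2 + nu) * qGamma (q ^ 2) nu * qGamma (q ^ 2) (1 - nu)))
        (Cminus (I3 q (- nu) z) (I3 q nu z)).

Definition is_integer (x : R) : Prop := exists n : Z, x = IZR n.

(* K3 q nu z stands for K_nu^{(3)}((1-q^2) z; q^2); at integer nu it is the
   limit mu -> nu (mu <> nu) of the non-integer formula, taken componentwise *)
Definition K3 (q nu : R) (z : C) : C :=
  if excluded_middle_informative (is_integer nu)
  then (real (Lim (fun mu => Re (K3_nonint q mu z)) nu),
        real (Lim (fun mu => Im (K3_nonint q mu z)) nu))
  else K3_nonint q nu z.

(* For non-integer nu both identities hold term by term.  After shifting the summation index
   of I_(nu-1) by one, the k-th terms of q^(-nu/2) I_(nu-1)(z), q^(nu/2) I_(nu+1)(z) and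
   I_nu(q^(±1/2) z) / z all carry the power (z/2)^(nu+1+2k), and their coefficients satisfy the
   two relations by the functional equation Gamma_b(x+1) = Gamma_b(x) (1 - b^x) / (1 - b),
   b = q^2.  The prefactor of K_nu changes sign under nu -> nu ± 1, so the relations for I_nu
   and I_(-nu) combine into those for K_nu.

   At an integer n, K_n is the limit of K_(n + 1/(k+1)).  At n = 0 this limit exists:
   eps Gamma_b(eps) converges, and (I_(-eps) - I_eps) / eps tends to -2 times the derivative of
   mu |-> I_mu at 0, which exists by termwise differentiation (the derivatives of the terms are
   dominated by a series (k+1) q^(k^2) r^k).  Solving the two relations for K_(nu+1) and
   K_(nu-1) propagates the existence of the limit to every integer, and the identities pass to
   the limit. *)

From Stdlib Require Import Reals Lra Lia Psatz ZArith ClassicalEpsilon.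
From Coquelicot Require Import Coquelicot.
Open Scope R_scope.

(** * q-Pochhammer products and the q-Gamma function *)

Lemma qPoch_succ_shift (a q : R) (n : nat) :
  qPoch a q (S n) = (1 - a) * qPoch (a * q) q n.
Proof.
  induction n as [|n IH].
  - simpl. ring.
  - change (qPoch a q (S (S n))) with (qPoch a q (S n) * (1 - a * q ^ S n)).
    rewrite IH. simpl. ring.
Qed.

Lemma real_Rbar_mult (c : R) (l : Rbar) : real (Rbar_mult (Finite c) l) = c * real l.
Proof.
  destruct l as [l| |]; simpl; try ring;
  unfold Rbar_mult, Rbar_mult'; simpl;
  destruct (Rle_dec 0 c) as [H|H]; try destruct (Rle_lt_or_eq_dec 0 c H);
  simpl; ring.
Qed.

Lemma qPochInf_shift (a b : R) : qPochInf a b = (1 - a) * qPochInf (a * b) b.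
Proof.
  unfold qPochInf. rewrite <- Lim_seq_incr_1.
  rewrite (Lim_seq_ext _ (fun n => (1 - a) * qPoch (a * b) b n)).
  2:{ intro n. apply qPoch_succ_shift. }
  rewrite Lim_seq_scal_l. apply real_Rbar_mult.
Qed.

Lemma Rpower_pos (b x : R) : 0 < Rpower b x.
Proof. unfold Rpower. apply exp_pos. Qed.

Lemma ln_lt_0 (b : R) : 0 < b < 1 -> ln b < 0.
Proof. intro hb. rewrite <- ln_1. apply ln_increasing; lra. Qed.

Lemma Rpower_lt_1 (b x : R) : 0 < b < 1 -> 0 < x -> Rpower b x < 1.
Proof.
  intros hb hx. unfold Rpower. rewrite <- exp_0. apply exp_increasing.
  pose proof (ln_lt_0 b hb). nra.
Qed.

Lemma Rpower_neq_1 (b x : R) : 0 < b < 1 -> x <> 0 -> Rpower b x <> 1.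
Proof.
  intros hb hx E. unfold Rpower in E. rewrite <- exp_0 in E. apply exp_inv in E.
  pose proof (ln_lt_0 b hb). apply Rmult_integral in E. destruct E; lra.
Qed.

Lemma exp_le_mono (x y : R) : x <= y -> exp x <= exp y.
Proof.
  intro h. destruct (Rle_lt_or_eq_dec _ _ h) as [hlt| ->]; [|lra].
  left. apply exp_increasing, hlt.
Qed.

Lemma pow_le_one (x : R) (n : nat) : 0 <= x <= 1 -> x ^ n <= 1.
Proof. intro h. induction n; simpl; nra. Qed.

Lemma pow_bounds (x : R) (n : nat) : 0 < x <= 1 -> 0 < x ^ n <= 1.
Proof. intro h. split; [apply pow_lt| apply pow_le_one]; lra. Qed.

Lemma sqr_lt_1 (q : R) : 0 < q < 1 -> 0 < q ^ 2 < 1.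
Proof. intro hq. split; nra. Qed.

Definition qPochInf_pow (b x : R) : R := qPochInf (Rpower b x) b.

Lemma qPochInf_pow_succ (b x : R) : 0 < b ->
  qPochInf_pow b x = (1 - Rpower b x) * qPochInf_pow b (x + 1).
Proof.
  intro hb. unfold qPochInf_pow. rewrite qPochInf_shift.
  rewrite Rpower_plus, Rpower_1; auto.
Qed.

Lemma qGamma_succ (b x : R) : 0 < b < 1 -> x <> 0 ->
  qGamma b (x + 1) = qGamma b x * (1 - Rpower b x) / (1 - b).
Proof.
  intros hb hx. unfold qGamma.
  pose proof (qPochInf_pow_succ b x (proj1 hb)) as E. unfold qPochInf_pow in E. rewrite E.
  assert (E2 : Rpower (1 - b) (1 - x) = Rpower (1 - b) (1 - (x + 1)) * (1 - b)).
  { replace (1 - x) with ((1 - (x + 1)) + 1) by ring. rewrite Rpower_plus, Rpower_1; lra. }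
  rewrite E2.
  pose proof (Rpower_neq_1 b x hb hx).
  unfold Rdiv. rewrite Rinv_mult.
  set (iP := / qPochInf (Rpower b (x + 1)) b).
  field. split; lra.
Qed.

Lemma exp_le_1_minus (y a : R) : 0 <= y <= a -> a < 1 -> exp (- (y / (1 - a))) <= 1 - y.
Proof.
  intros hy ha. set (s := y / (1 - a)).
  assert (hs : 0 <= s) by (unfold s; apply Rdiv_le_0_compat; lra).
  assert (exp s >= 1 + s) by (pose proof (exp_ineq1_le s); lra).
  rewrite exp_Ropp.
  assert (y <= s * (1 - y)).
  { unfold s. apply (Rmult_le_reg_r (1 - a)); [lra|]. field_simplify; [|lra]. nra. }
  apply (Rmult_le_reg_r (exp s)); [apply exp_pos|].
  rewrite Rinv_l by (apply Rgt_not_eq, exp_pos). nra.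
Qed.

Lemma qPoch_ge_exp (a b : R) (n : nat) : 0 <= a < 1 -> 0 < b < 1 ->
  exp (- (a * (1 - b ^ n) / ((1 - a) * (1 - b)))) <= qPoch a b n.
Proof.
  intros ha hb. induction n as [|n IH].
  - simpl. replace (a * (1 - 1) / ((1 - a) * (1 - b))) with 0 by (field; lra).
    rewrite Ropp_0, exp_0. lra.
  - simpl qPoch. pose proof (pow_bounds b n ltac:(lra)).
    assert (exp (- (a * b ^ n / (1 - a))) <= 1 - a * b ^ n).
    { apply exp_le_1_minus; [split; nra| lra]. }
    replace (- (a * (1 - b ^ S n) / ((1 - a) * (1 - b))))
      with (- (a * (1 - b ^ n) / ((1 - a) * (1 - b))) + - (a * b ^ n / (1 - a)))
      by (simpl; field; lra).
    rewrite exp_plus. apply Rmult_le_compat; try (left; apply exp_pos); auto.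
Qed.

Lemma qPoch_bounds (a b : R) (n : nat) : 0 <= a < 1 -> 0 < b < 1 ->
  0 < qPoch a b n <= 1.
Proof.
  intros ha hb. induction n as [|n IH]; simpl; [lra|].
  pose proof (pow_bounds b n ltac:(lra)).
  assert (0 <= a * b ^ n) by nra.
  split; [apply Rmult_lt_0_compat|]; nra.
Qed.

Lemma qPoch_succ_le (a b : R) (n : nat) : 0 <= a < 1 -> 0 < b < 1 ->
  qPoch a b (S n) <= qPoch a b n.
Proof.
  intros ha hb. simpl. pose proof (qPoch_bounds a b n ha hb).
  pose proof (pow_bounds b n ltac:(lra)).
  assert (0 <= a * b ^ n) by nra. nra.
Qed.

Lemma qPochInf_spec (a b : R) : 0 <= a < 1 -> 0 < b < 1 ->
  is_lim_seq (qPoch a b) (qPochInf a b) /\ 0 < qPochInf a b <= 1.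
Proof.
  intros ha hb.
  set (low := exp (- (a / ((1 - a) * (1 - b))))).
  assert (hlow : forall n, low <= qPoch a b n).
  { intro n. eapply Rle_trans; [|apply qPoch_ge_exp; auto].
    apply exp_le_mono, Ropp_le_contravar.
    unfold Rdiv. rewrite !Rmult_assoc. apply Rmult_le_compat_l; [lra|].
    assert (0 < b ^ n) by (apply pow_lt; lra).
    assert (0 < / ((1 - a) * (1 - b))) by (apply Rinv_0_lt_compat; nra).
    nra. }
  destruct (ex_finite_lim_seq_decr (qPoch a b) low) as [l hl].
  { intro n. apply qPoch_succ_le; auto. }
  { exact hlow. }
  assert (E : qPochInf a b = l).
  { unfold qPochInf. rewrite (is_lim_seq_unique (fun n => qPoch a b n) l hl). reflexivity. }
  rewrite E. split; [exact hl|]. split.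
  - apply Rlt_le_trans with low; [apply exp_pos|].
    exact (is_lim_seq_le (fun _ => low) _ _ _ hlow (is_lim_seq_const _) hl).
  - exact (is_lim_seq_le _ (fun _ => 1) _ _ (fun n => proj2 (qPoch_bounds a b n ha hb))
             hl (is_lim_seq_const _)).
Qed.

Lemma qPochInf_pow_spec (b x : R) : 0 < b < 1 -> 0 < x ->
  is_lim_seq (qPoch (Rpower b x) b) (qPochInf_pow b x) /\ 0 < qPochInf_pow b x <= 1.
Proof.
  intros hb hx. pose proof (Rpower_lt_1 b x hb hx). pose proof (Rpower_pos b x).
  apply qPochInf_spec; lra.
Qed.

Lemma qPochInf_pow_add_nat (b x : R) (m : nat) : 0 < b ->
  qPochInf_pow b x = qPoch (Rpower b x) b m * qPochInf_pow b (x + INR m).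
Proof.
  intro hb. revert x. induction m as [|m IH]; intro x.
  - simpl. rewrite Rplus_0_r. ring.
  - rewrite qPochInf_pow_succ, IH, qPoch_succ_shift by auto.
    replace (x + 1 + INR m) with (x + INR (S m)) by (rewrite S_INR; ring).
    rewrite Rpower_plus, Rpower_1 by auto. ring.
Qed.

Lemma is_integer_add (x y : R) : is_integer x -> is_integer y -> is_integer (x + y).
Proof. intros [m ->] [n ->]. exists (m + n)%Z. symmetry. apply plus_IZR. Qed.

Lemma is_integer_opp (x : R) : is_integer x -> is_integer (- x).
Proof. intros [m ->]. exists (- m)%Z. symmetry. apply opp_IZR. Qed.

Lemma is_integer_IZR (n : Z) : is_integer (IZR n).
Proof. exists n. reflexivity. Qed.

Lemma is_integer_INR (n : nat) : is_integer (INR n).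
Proof. exists (Z.of_nat n). apply INR_IZR_INZ. Qed.

Lemma not_integer_add (x m : R) : ~ is_integer x -> is_integer m -> ~ is_integer (x + m).
Proof.
  intros hx hm hxm. apply hx. replace x with (x + m + - m) by ring.
  apply is_integer_add; [exact hxm| apply is_integer_opp, hm].
Qed.

Lemma is_integer_minus (x y : R) : is_integer x -> is_integer y -> is_integer (x - y).
Proof. intros hx hy. apply is_integer_add; [exact hx| apply is_integer_opp, hy]. Qed.

Lemma not_integer_minus (x m : R) : ~ is_integer x -> is_integer m -> ~ is_integer (x - m).
Proof. intros hx hm. apply not_integer_add; [exact hx| apply is_integer_opp, hm]. Qed.

Lemma not_integer_opp (x : R) : ~ is_integer x -> ~ is_integer (- x).
Proof. intros hx h. apply hx. rewrite <- (Ropp_involutive x). apply is_integer_opp, h. Qed.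

Lemma not_integer_neq_0 (x : R) : ~ is_integer x -> x <> 0.
Proof. intros hx ->. apply hx, (is_integer_IZR 0). Qed.

Lemma qPoch_pow_neq_0 (b x : R) (m : nat) : 0 < b < 1 -> ~ is_integer x ->
  qPoch (Rpower b x) b m <> 0.
Proof.
  intros hb hx. induction m as [|m IH]; simpl; [lra|].
  apply Rmult_integral_contrapositive_currified; auto.
  rewrite <- (Rpower_pow m b), <- Rpower_plus by lra.
  assert (hxm : x + INR m <> 0)
    by exact (not_integer_neq_0 _ (not_integer_add _ _ hx (is_integer_INR m))).
  pose proof (Rpower_neq_1 b (x + INR m) hb hxm). lra.
Qed.

Lemma qPochInf_pow_neq_0 (b x : R) : 0 < b < 1 -> ~ is_integer x -> qPochInf_pow b x <> 0.
Proof.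
  intros hb hx. destruct (INR_unbounded (- x)) as [m hm].
  rewrite (qPochInf_pow_add_nat b x m) by lra.
  apply Rmult_integral_contrapositive_currified.
  - apply qPoch_pow_neq_0; auto.
  - destruct (qPochInf_pow_spec b (x + INR m) hb ltac:(lra)) as [_ H]; lra.
Qed.

Lemma qGamma_neq_0 (b x : R) : 0 < b < 1 -> ~ is_integer x -> qGamma b x <> 0.
Proof.
  intros hb hx. unfold qGamma.
  destruct (qPochInf_pow_spec b 1 hb ltac:(lra)) as [_ H1].
  unfold qPochInf_pow in H1. rewrite Rpower_1 in H1 by lra.
  pose proof (qPochInf_pow_neq_0 b x hb hx) as H2. unfold qPochInf_pow in H2.
  pose proof (Rpower_pos (1 - b) (1 - x)).
  unfold Rdiv. repeat apply Rmult_integral_contrapositive_currified; try lra.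
  apply Rinv_neq_0_compat; auto.
Qed.

(** * Principal powers and complex series *)

Definition slit (w : C) := ~ (Im w = 0 /\ Re w <= 0).

Lemma slit_Cmod_pos (w : C) : slit w -> 0 < Cmod w /\ 0 < Cmod w + Re w.
Proof.
  intro h. unfold slit in h. unfold Cmod.
  set (x := fst w). set (y := snd w). change (Im w) with y in h. change (Re w) with x in *.
  assert (hs : 0 <= sqrt (x ^ 2 + y ^ 2)) by apply sqrt_pos.
  assert (hsq : sqrt (x ^ 2 + y ^ 2) * sqrt (x ^ 2 + y ^ 2) = x ^ 2 + y ^ 2)
    by (apply sqrt_sqrt; nra).
  destruct (Req_dec y 0) as [hy|hy].
  - assert (x > 0) by (destruct (Rle_dec x 0); [exfalso; tauto| lra]).
    subst y. split; nra.
  - assert (0 < y ^ 2) by (simpl; nra).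
    split; [nra|].
    destruct (Rle_dec x 0); [|nra].
    assert (sqrt (x ^ 2 + y ^ 2) > - x) by nra. lra.
Qed.

Lemma slit_neq_0 (w : C) : slit w -> w <> RtoC 0.
Proof. intros h ->. apply h. unfold RtoC, Re, Im. simpl. lra. Qed.

Lemma Re_scal (c : R) (w : C) : Re (Cmult (RtoC c) w) = c * Re w.
Proof. destruct w; unfold Re, RtoC, Cmult; simpl; ring. Qed.

Lemma Im_scal (c : R) (w : C) : Im (Cmult (RtoC c) w) = c * Im w.
Proof. destruct w; unfold Im, RtoC, Cmult; simpl; ring. Qed.

Lemma Cmod_scal (c : R) (w : C) : 0 < c -> Cmod (Cmult (RtoC c) w) = c * Cmod w.
Proof. intro hc. rewrite Cmod_mult, Cmod_R, Rabs_pos_eq; lra. Qed.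

Lemma slit_scal (c : R) (w : C) : 0 < c -> slit w -> slit (Cmult (RtoC c) w).
Proof.
  intros hc h [h1 h2]. apply h. rewrite Re_scal in h2. rewrite Im_scal in h1.
  split.
  - apply Rmult_integral in h1. destruct h1; lra.
  - apply (Rmult_le_reg_l c); lra.
Qed.

Lemma Cdiv_2 (w : C) : Cdiv w (RtoC 2) = Cmult (RtoC (/ 2)) w.
Proof.
  apply injective_projections; destruct w; unfold Cdiv, Cinv, Cmult, RtoC; cbv [fst snd]; field.
Qed.

Lemma slit_div_2 (w : C) : slit w -> slit (Cdiv w (RtoC 2)).
Proof. intro h. rewrite Cdiv_2. apply slit_scal; auto; lra. Qed.

Lemma Carg_scal (c : R) (w : C) : 0 < c -> Carg (Cmult (RtoC c) w) = Carg w.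
Proof.
  intro hc. unfold Carg. rewrite Cmod_scal, Re_scal, Im_scal by auto.
  replace (c * Cmod w + c * Re w) with (c * (Cmod w + Re w)) by ring.
  unfold Rdiv. rewrite Rinv_mult. set (iD := / (Cmod w + Re w)).
  do 2 f_equal. field. lra.
Qed.

Lemma Cmod_Cpowr (w : C) (a : R) : Cmod (Cpowr w a) = Rpower (Cmod w) a.
Proof.
  unfold Cpowr, Cmod at 1. cbn [fst snd].
  set (P := Rpower (Cmod w) a). set (t := a * Carg w).
  replace ((P * cos t) ^ 2 + (P * sin t) ^ 2) with (P ^ 2 * (sin t ^ 2 + cos t ^ 2)) by ring.
  assert (E : sin t ^ 2 + cos t ^ 2 = 1).
  { pose proof (sin2_cos2 t) as H. unfold Rsqr in H. simpl. lra. }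
  rewrite E, Rmult_1_r. apply sqrt_pow2. left; apply Rpower_pos.
Qed.

Lemma Cpowr_plus (w : C) (a c : R) : Cpowr w (a + c) = Cmult (Cpowr w a) (Cpowr w c).
Proof.
  unfold Cpowr. rewrite Rpower_plus, Rmult_plus_distr_r, cos_plus, sin_plus.
  apply injective_projections; simpl; ring.
Qed.

(* [Carg] is the half-angle formula [2 atan (y / (|w| + x))], so [w^1 = w] amounts to the
   double-angle formulas for [t = y / (|w| + x)], together with [|w| - x = t^2 (|w| + x)]. *)
Lemma Cpowr_1 (w : C) : slit w -> Cpowr w 1 = w.
Proof.
  intro h. destruct (slit_Cmod_pos w h) as [h1 h2].
  unfold Cpowr, Carg. rewrite Rpower_1 by auto. rewrite !Rmult_1_l.
  revert h1 h2. unfold Cmod. destruct w as [x y]. unfold Re, Im. cbv [fst snd]. intros h1 h2.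
  set (r := sqrt (x ^ 2 + y ^ 2)) in *.
  assert (hr : r * r = x ^ 2 + y ^ 2) by (apply sqrt_sqrt; nra).
  set (t := y / (r + x)).
  assert (hs : sqrt (1 + t²) * sqrt (1 + t²) = 1 + t²)
    by (apply sqrt_sqrt; unfold Rsqr; nra).
  assert (hsp : 0 < sqrt (1 + t²)) by (apply sqrt_lt_R0; unfold Rsqr; nra).
  rewrite cos_2a, sin_2a, cos_atan, sin_atan.
  assert (ht : t * (r + x) = y) by (unfold t; field; intro; lra).
  assert (h3 : r - x = t * t * (r + x)).
  { assert (E : (r - x - t * t * (r + x)) * (r + x) = 0).
    { rewrite <- ht in hr. simpl in hr. ring_simplify. ring_simplify in hr. lra. }
    apply Rmult_integral in E. destruct E; lra. }
  set (s := sqrt (1 + t²)) in *.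
  apply injective_projections; cbn [fst snd].
  - replace (r * (1 / s * (1 / s) - t / s * (t / s))) with (r * (1 - t * t) / (s * s))
      by (field; intro; lra).
    rewrite hs. unfold Rsqr. apply (Rmult_eq_reg_r (1 + t * t)); [|nra].
    field_simplify; [|nra]. ring_simplify in h3. ring_simplify. lra.
  - replace (r * (2 * (t / s) * (1 / s))) with (2 * r * t / (s * s))
      by (field; intro; lra).
    rewrite hs. unfold Rsqr. apply (Rmult_eq_reg_r (1 + t * t)); [|nra].
    field_simplify; [|nra]. rewrite <- ht.
    replace (t ^ 2 * (t * (r + x)) + t * (r + x)) with (t * (t * t * (r + x) + (r + x))) by ring.
    rewrite <- h3. ring.
Qed.

Lemma Cpowr_scal (c : R) (w : C) (a : R) : 0 < c -> 0 < Cmod w ->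
  Cpowr (Cmult (RtoC c) w) a = Cmult (RtoC (Rpower c a)) (Cpowr w a).
Proof.
  intros hc hw. unfold Cpowr. rewrite Carg_scal, Cmod_scal by auto.
  rewrite <- Rpower_mult_distr by auto.
  apply injective_projections; unfold RtoC, Cmult; cbv [fst snd]; ring.
Qed.

Lemma Cinv_mult_Cpowr_half (z : C) (a : R) : slit z ->
  Cmult (Cinv z) (Cpowr (Cdiv z (RtoC 2)) a) =
  Cmult (RtoC (/ 2)) (Cpowr (Cdiv z (RtoC 2)) (a - 1)).
Proof.
  intro h. replace a with ((a - 1) + 1) at 1 by ring.
  rewrite Cpowr_plus, Cpowr_1 by (apply slit_div_2; auto).
  pose proof (slit_neq_0 z h).
  rewrite Cdiv_2. field. auto.
Qed.

Lemma ex_series_R_scal (c : R) (a : nat -> R) : ex_series a -> ex_series (fun k => c * a k).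
Proof. apply (@ex_series_scal_l R_AbsRing R_NormedModule). Qed.

Lemma ex_series_R_plus (a b : nat -> R) :
  ex_series a -> ex_series b -> ex_series (fun k => a k + b k).
Proof. apply (@ex_series_plus R_AbsRing R_NormedModule). Qed.

Lemma ex_series_R_minus (a b : nat -> R) :
  ex_series a -> ex_series b -> ex_series (fun k => a k - b k).
Proof. apply (@ex_series_minus R_AbsRing R_NormedModule). Qed.

Lemma ex_series_R_ext (a b : nat -> R) : (forall n, a n = b n) -> ex_series a -> ex_series b.
Proof. apply (@ex_series_ext R_AbsRing R_NormedModule). Qed.

Lemma ex_series_R_le (a b : nat -> R) :
  (forall n, Rabs (a n) <= b n) -> ex_series b -> ex_series a.
Proof. apply (@ex_series_le R_AbsRing R_CompleteNormedModule). Qed.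

Definition CSeries (a : nat -> C) : C :=
  (Series (fun k => Re (a k)), Series (fun k => Im (a k))).

Definition ex_CSeries (a : nat -> C) :=
  ex_series (fun k => Re (a k)) /\ ex_series (fun k => Im (a k)).

Lemma ex_CSeries_ext (a b : nat -> C) : (forall k, a k = b k) -> ex_CSeries a -> ex_CSeries b.
Proof.
  intros E [h1 h2]. split.
  - apply (ex_series_R_ext (fun k => Re (a k))); auto. intro k. rewrite E. reflexivity.
  - apply (ex_series_R_ext (fun k => Im (a k))); auto. intro k. rewrite E. reflexivity.
Qed.

Lemma CSeries_ext (a b : nat -> C) : (forall k, a k = b k) -> CSeries a = CSeries b.
Proof. intros E. unfold CSeries. f_equal; apply Series_ext; intro; rewrite E; auto. Qed.

Lemma ex_CSeries_plus (a b : nat -> C) :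
  ex_CSeries a -> ex_CSeries b -> ex_CSeries (fun k => Cplus (a k) (b k)).
Proof.
  intros [h1 h2] [h3 h4]. split; simpl.
  - apply (ex_series_R_plus (fun k => Re (a k)) (fun k => Re (b k))); auto.
  - apply (ex_series_R_plus (fun k => Im (a k)) (fun k => Im (b k))); auto.
Qed.

Lemma ex_CSeries_scal (c : C) (a : nat -> C) :
  ex_CSeries a -> ex_CSeries (fun k => Cmult c (a k)).
Proof.
  intros [h1 h2]. split; unfold Cmult; simpl.
  - apply (ex_series_R_minus (fun k => fst c * Re (a k)) (fun k => snd c * Im (a k)));
      apply ex_series_R_scal; auto.
  - apply (ex_series_R_plus (fun k => fst c * Im (a k)) (fun k => snd c * Re (a k)));
      apply ex_series_R_scal; auto.
Qed.

Lemma Cminus_as_plus_scal (u v : C) : Cminus u v = Cplus u (Cmult (RtoC (-1)) v).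
Proof. unfold Cminus. f_equal. apply injective_projections; unfold Cmult, Copp, RtoC; simpl; ring. Qed.

Lemma ex_CSeries_minus (a b : nat -> C) :
  ex_CSeries a -> ex_CSeries b -> ex_CSeries (fun k => Cminus (a k) (b k)).
Proof.
  intros h1 h2. apply (ex_CSeries_ext (fun k => Cplus (a k) (Cmult (RtoC (-1)) (b k)))).
  - intro k. symmetry. apply Cminus_as_plus_scal.
  - apply ex_CSeries_plus, ex_CSeries_scal; auto.
Qed.

Lemma CSeries_plus (a b : nat -> C) : ex_CSeries a -> ex_CSeries b ->
  CSeries (fun k => Cplus (a k) (b k)) = Cplus (CSeries a) (CSeries b).
Proof.
  intros [h1 h2] [h3 h4]. unfold ex_CSeries, CSeries, Cplus, Re, Im in *.
  apply injective_projections; cbn [fst snd].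
  - apply (Series_plus (fun k => fst (a k)) (fun k => fst (b k))); auto.
  - apply (Series_plus (fun k => snd (a k)) (fun k => snd (b k))); auto.
Qed.

Lemma CSeries_scal (c : C) (a : nat -> C) : ex_CSeries a ->
  CSeries (fun k => Cmult c (a k)) = Cmult c (CSeries a).
Proof.
  intros [h1 h2]. unfold ex_CSeries, CSeries, Cmult, Re, Im in *.
  apply injective_projections; cbn [fst snd].
  - rewrite (Series_minus (fun k => fst c * fst (a k)) (fun k => snd c * snd (a k)))
      by (apply ex_series_R_scal; auto).
    rewrite !Series_scal_l. reflexivity.
  - rewrite (Series_plus (fun k => fst c * snd (a k)) (fun k => snd c * fst (a k)))
      by (apply ex_series_R_scal; auto).
    rewrite !Series_scal_l. ring.
Qed.

Lemma CSeries_minus (a b : nat -> C) : ex_CSeries a -> ex_CSeries b ->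
  CSeries (fun k => Cminus (a k) (b k)) = Cminus (CSeries a) (CSeries b).
Proof.
  intros h1 h2.
  rewrite (CSeries_ext _ (fun k => Cplus (a k) (Cmult (RtoC (-1)) (b k))))
    by (intro; apply Cminus_as_plus_scal).
  rewrite CSeries_plus, CSeries_scal by (auto; apply ex_CSeries_scal; auto).
  symmetry. apply Cminus_as_plus_scal.
Qed.

Lemma ex_CSeries_succ (a : nat -> C) : ex_CSeries a -> ex_CSeries (fun k => a (S k)).
Proof.
  intros [h1 h2].
  split; [apply (ex_series_incr_1 (fun k => Re (a k)))| apply (ex_series_incr_1 (fun k => Im (a k)))];
    auto.
Qed.

Lemma CSeries_incr_1 (a : nat -> C) : ex_CSeries a ->
  CSeries a = Cplus (a 0%nat) (CSeries (fun k => a (S k))).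
Proof.
  intros [h1 h2]. unfold CSeries. apply injective_projections; simpl.
  - apply (Series_incr_1 (fun k => Re (a k))); auto.
  - apply (Series_incr_1 (fun k => Im (a k))); auto.
Qed.

Lemma Rabs_Im_le_Cmod (c : C) : Rabs (Im c) <= Cmod c.
Proof.
  unfold Cmod. rewrite <- sqrt_Rsqr_abs. apply sqrt_le_1_alt. unfold Rsqr, Im.
  simpl. pose proof (Rle_0_sqr (fst c)) as h. unfold Rsqr in h. nra.
Qed.

Lemma ex_CSeries_le (a : nat -> C) (M : nat -> R) (K : nat) :
  (forall k, (K <= k)%nat -> Cmod (a k) <= M k) -> ex_series M -> ex_CSeries a.
Proof.
  intros hb hM.
  assert (hMK : ex_series (fun k => M (K + k)%nat)) by (apply (proj1 (ex_series_incr_n M K)); auto).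
  split; apply (proj2 (ex_series_incr_n _ K)); refine (ex_series_R_le _ _ _ hMK); intro k.
  - eapply Rle_trans; [apply re_le_Cmod| apply hb; lia].
  - eapply Rle_trans; [apply Rabs_Im_le_Cmod| apply hb; lia].
Qed.

(** * Convergence of the series of I_nu *)

Lemma ex_series_succ_gaussian (q r : R) : 0 < q < 1 -> 0 < r ->
  ex_series (fun n => (INR n + 1) * q ^ (n * n) * r ^ n).
Proof.
  intros hq hr.
  set (a := fun n : nat => (INR n + 1) * q ^ (n * n) * r ^ n).
  assert (hpos : forall n, 0 < a n).
  { intro n. unfold a. pose proof (pos_INR n).
    apply Rmult_lt_0_compat; [apply Rmult_lt_0_compat|]; try lra; apply pow_lt; lra. }
  apply (ex_series_ext (fun n => Rabs (a n))).
  { intro n. rewrite Rabs_pos_eq; [reflexivity| left; apply hpos]. }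
  apply (ex_series_DAlembert a 0); [lra| intro n; pose proof (hpos n); lra|].
  apply (is_lim_seq_le_le (fun _ => 0) _ (fun n => 2 * q * r * (q ^ 2) ^ n)).
  - intro n. split; [apply Rabs_pos|].
    rewrite Rabs_pos_eq by (left; apply Rdiv_lt_0_compat; apply hpos).
    unfold a. rewrite S_INR.
    replace (S n * S n)%nat with (n * n + (2 * n + 1))%nat by lia.
    rewrite pow_add, <- pow_mult, pow_add, pow_1, <- tech_pow_Rmult.
    pose proof (pos_INR n).
    assert (0 < q ^ (n * n)) by (apply pow_lt; lra).
    assert (0 < r ^ n) by (apply pow_lt; lra).
    assert (0 < q ^ (2 * n)) by (apply pow_lt; nra).
    replace ((INR n + 1 + 1) * (q ^ (n * n) * (q ^ (2 * n) * q)) * (r * r ^ n) /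
             ((INR n + 1) * q ^ (n * n) * r ^ n))
      with ((INR n + 2) / (INR n + 1) * q * r * q ^ (2 * n)) by (field; split; lra).
    do 3 (apply Rmult_le_compat_r; [lra|]).
    apply (Rmult_le_reg_r (INR n + 1)); [lra|].
    unfold Rdiv. rewrite Rmult_assoc, Rinv_l by lra. lra.
  - apply is_lim_seq_const.
  - replace (Finite 0) with (Rbar_mult (2 * q * r) 0) by (simpl; f_equal; ring).
    apply is_lim_seq_scal_l, is_lim_seq_geom.
    rewrite Rabs_pos_eq by nra. nra.
Qed.

Lemma ex_series_gaussian (q r : R) : 0 < q < 1 -> 0 < r ->
  ex_series (fun n => q ^ (n * n) * r ^ n).
Proof.
  intros hq hr.
  refine (ex_series_R_le _ _ _ (ex_series_succ_gaussian q r hq hr)). intro n.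
  assert (0 < q ^ (n * n)) by (apply pow_lt; lra).
  assert (0 < r ^ n) by (apply pow_lt; lra). pose proof (pos_INR n).
  assert (0 < q ^ (n * n) * r ^ n) by (apply Rmult_lt_0_compat; auto).
  rewrite Rabs_pos_eq, Rmult_assoc by lra. nra.
Qed.

Lemma pow_le_qPoch (b : R) (k : nat) : 0 < b < 1 -> (1 - b) ^ k <= qPoch b b k.
Proof.
  intro hb. induction k as [|k IH]; simpl; [lra|].
  pose proof (pow_bounds b k ltac:(lra)).
  assert (0 < (1 - b) ^ k) by (apply pow_lt; lra).
  assert (1 - b <= 1 - b * b ^ k) by nra.
  rewrite Rmult_comm. apply Rmult_le_compat; lra.
Qed.

Lemma pow_div_qPoch_bounds (b : R) (k : nat) : 0 < b < 1 ->
  0 < (1 - b) ^ k / qPoch b b k <= 1.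
Proof.
  intro hb. pose proof (pow_le_qPoch b k hb).
  assert (0 < qPoch b b k) by (apply qPoch_bounds; lra).
  assert (0 < (1 - b) ^ k) by (apply pow_lt; lra).
  split; [apply Rdiv_lt_0_compat; lra|].
  apply (Rmult_le_reg_r (qPoch b b k)); [lra|].
  unfold Rdiv. rewrite Rmult_assoc, Rinv_l by lra. lra.
Qed.

Lemma Rabs_inv_qGamma_le (b x : R) : 0 < b < 1 -> 1 <= x ->
  Rabs (/ qGamma b x) <= / qPochInf_pow b 1.
Proof.
  intros hb hx. unfold qGamma.
  destruct (qPochInf_pow_spec b 1 hb ltac:(lra)) as [_ H1].
  destruct (qPochInf_pow_spec b x hb ltac:(lra)) as [_ H2].
  unfold qPochInf_pow in H1, H2 |- *. rewrite Rpower_1 in H1 |- * by lra.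
  pose proof (Rpower_pos (1 - b) (1 - x)).
  assert (Rpower (1 - b) (1 - x) >= 1).
  { unfold Rpower. pose proof (ln_lt_0 (1 - b) ltac:(lra)).
    assert (hle : 0 <= (1 - x) * ln (1 - b)) by nra.
    apply exp_le_mono in hle. rewrite exp_0 in hle. lra. }
  unfold Rdiv. rewrite !Rinv_mult, Rinv_inv.
  set (A := qPochInf b b) in *. set (B := qPochInf (Rpower b x) b) in *.
  set (C0 := Rpower (1 - b) (1 - x)) in *.
  assert (0 < / A) by (apply Rinv_0_lt_compat; lra).
  assert (0 < / C0 <= 1).
  { split; [apply Rinv_0_lt_compat; lra|]. rewrite <- Rinv_1. apply Rinv_le_contravar; lra. }
  rewrite !Rabs_mult, (Rabs_pos_eq (/ A)), (Rabs_pos_eq (/ C0)), (Rabs_pos_eq B) by lra.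
  replace (/ A) with (/ A * 1 * 1) at 2 by ring.
  apply Rmult_le_compat; nra.
Qed.

Lemma Rpower_mult_quadratic (q mu : R) (k : nat) : 0 < q ->
  Rpower q (INR k * (mu + INR k)) = Rpower q mu ^ k * q ^ (k * k).
Proof.
  intro hq. replace (INR k * (mu + INR k)) with (mu * INR k + INR (k * k))
    by (rewrite mult_INR; ring).
  rewrite Rpower_plus, <- Rpower_mult, !Rpower_pow; auto. apply Rpower_pos.
Qed.

Lemma Rpower_plus_double (r mu : R) (k : nat) : 0 < r ->
  Rpower r (mu + 2 * INR k) = Rpower r mu * (r ^ 2) ^ k.
Proof.
  intro hr. replace (2 * INR k) with (INR (2 * k)) by (rewrite mult_INR; simpl; ring).
  rewrite Rpower_plus, Rpower_pow, pow_mult; auto.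
Qed.

Lemma I3_CSeries (q nu : R) (z : C) : I3 q nu z = CSeries (I3_term q nu z).
Proof. reflexivity. Qed.

(* Once [mu + k + 1 >= 1], [1 / Gamma_b] is bounded by [1 / (b; b)_oo]. *)
Lemma Cmod_I3_term_le (q mu : R) (z : C) (k : nat) : 0 < q < 1 -> slit z ->
  1 <= mu + INR k + 1 ->
  Cmod (I3_term q mu z k) <= / qPochInf_pow (q ^ 2) 1 * Rpower (Cmod (Cdiv z (RtoC 2))) mu
    * (q ^ (k * k) * (Rpower q mu * Cmod (Cdiv z (RtoC 2)) ^ 2) ^ k).
Proof.
  intros hq hz hx.
  set (b := q ^ 2). pose proof (sqr_lt_1 q hq) as hb. fold b in hb.
  set (r := Cmod (Cdiv z (RtoC 2))).
  assert (hr : 0 < r) by apply (slit_Cmod_pos _ (slit_div_2 z hz)).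
  unfold I3_term. rewrite Cmod_mult, Cmod_R, Cmod_Cpowr. fold r b.
  rewrite Rpower_plus_double, Rpower_mult_quadratic, Rpow_mult_distr by lra.
  replace (Rpower q mu ^ k * q ^ (k * k) * (1 - b) ^ k / (qPoch b b k * qGamma b (mu + INR k + 1)))
    with ((Rpower q mu ^ k * q ^ (k * k)) * ((1 - b) ^ k / qPoch b b k)
          * / qGamma b (mu + INR k + 1)) by (unfold Rdiv; rewrite Rinv_mult; ring).
  pose proof (pow_div_qPoch_bounds b k hb).
  pose proof (Rabs_inv_qGamma_le b _ hb hx).
  set (Y := Rpower q mu ^ k * q ^ (k * k)).
  set (X := (1 - b) ^ k / qPoch b b k) in *.
  set (G := / qGamma b (mu + INR k + 1)) in *.
  assert (0 < Y) by (apply Rmult_lt_0_compat; apply pow_lt; [apply Rpower_pos| lra]).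
  pose proof (Rabs_pos G).
  assert (0 < Rpower r mu * (r ^ 2) ^ k)
    by (apply Rmult_lt_0_compat; [apply Rpower_pos| apply pow_lt; nra]).
  rewrite !Rabs_mult, (Rabs_pos_eq Y), (Rabs_pos_eq X) by lra.
  apply Rle_trans with (Y * (Rpower r mu * (r ^ 2) ^ k) * (X * Rabs G)); [right; ring|].
  apply Rle_trans with (Y * (Rpower r mu * (r ^ 2) ^ k) * (1 * / qPochInf_pow b 1));
    [apply Rmult_le_compat_l; [nra| apply Rmult_le_compat; lra]| right; unfold Y; ring].
Qed.

Lemma ex_CSeries_I3_term (q mu : R) (z : C) : 0 < q < 1 -> slit z ->
  ex_CSeries (I3_term q mu z).
Proof.
  intros hq hz.
  destruct (INR_unbounded (- mu)) as [K hK].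
  assert (hr : 0 < Cmod (Cdiv z (RtoC 2))) by apply (slit_Cmod_pos _ (slit_div_2 z hz)).
  apply (ex_CSeries_le _ (fun k => / qPochInf_pow (q ^ 2) 1 * Rpower (Cmod (Cdiv z (RtoC 2))) mu
    * (q ^ (k * k) * (Rpower q mu * Cmod (Cdiv z (RtoC 2)) ^ 2) ^ k)) K).
  - intros k hk. apply Cmod_I3_term_le; auto. apply le_INR in hk. lra.
  - apply ex_series_R_scal, ex_series_gaussian; auto.
    apply Rmult_lt_0_compat; [apply Rpower_pos| nra].
Qed.

(** * Contiguous relations for non-integer order *)

Definition I3_coef (q mu : R) (k : nat) : R :=
  Rpower q (INR k * (mu + INR k)) * (1 - q ^ 2) ^ k
    / (qPoch (q ^ 2) (q ^ 2) k * qGamma (q ^ 2) (mu + INR k + 1)).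

Lemma I3_term_coef (q mu : R) (w : C) (k : nat) :
  I3_term q mu w k = Cmult (RtoC (I3_coef q mu k)) (Cpowr (Cdiv w (RtoC 2)) (mu + 2 * INR k)).
Proof. reflexivity. Qed.

Lemma Cinv_mult_I3_term_scal (q mu c : R) (z : C) (k : nat) : 0 < c -> slit z ->
  Cmult (Cinv z) (I3_term q mu (Cmult (RtoC c) z) k) =
  Cmult (RtoC (I3_coef q mu k * Rpower c (mu + 2 * INR k) * / 2))
        (Cpowr (Cdiv z (RtoC 2)) (mu + 2 * INR k - 1)).
Proof.
  intros hc hz. rewrite I3_term_coef.
  replace (Cdiv (Cmult (RtoC c) z) (RtoC 2)) with (Cmult (RtoC c) (Cdiv z (RtoC 2)))
    by (rewrite !Cdiv_2; field).
  rewrite Cpowr_scal by (auto; apply (slit_Cmod_pos _ (slit_div_2 z hz))).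
  transitivity (Cmult (RtoC (I3_coef q mu k * Rpower c (mu + 2 * INR k)))
                  (Cmult (Cinv z) (Cpowr (Cdiv z (RtoC 2)) (mu + 2 * INR k)))).
  { rewrite RtoC_mult. ring. }
  rewrite Cinv_mult_Cpowr_half by auto. rewrite !RtoC_mult. ring.
Qed.

Lemma Rpower_sqr_base (q x : R) : 0 < q -> Rpower (q ^ 2) x = Rpower q x * Rpower q x.
Proof.
  intro hq. replace (q ^ 2) with (Rpower q 2).
  2:{ replace 2 with (INR 2) by (simpl; ring). apply Rpower_pow; auto. }
  rewrite Rpower_mult, <- Rpower_plus. f_equal. ring.
Qed.

Lemma Rpower_Rpower_half (q x : R) : Rpower (Rpower q (1 / 2)) x = Rpower q (x / 2).
Proof. rewrite Rpower_mult. f_equal. field. Qed.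

Lemma Rpower_Rpower_opp_half (q x : R) : Rpower (Rpower q (- 1 / 2)) x = / Rpower q (x / 2).
Proof. rewrite Rpower_mult, <- Rpower_Ropp. f_equal. field. Qed.

Lemma pow_sqr_base (q : R) (k : nat) : (q ^ 2) ^ k = q ^ k * q ^ k.
Proof. replace (q ^ 2) with (q * q) by ring. apply Rpow_mult_distr. Qed.

(* Every power of [q] occurring in the coefficient identities below is a monomial in
   [h = q^(mu/2)], [E = q^(k (mu + k))] and [q^k]; these normal forms reduce the identities
   to rational identities, checked by [field]. *)
Section ExponentNormalForms.
Variables (q mu : R) (k : nat).
Hypothesis hq : 0 < q.
Let h := Rpower q (mu / 2).
Let E := Rpower q (INR k * (mu + INR k)).

Lemma Rpower_as_half_sqr : Rpower q mu = h * h.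
Proof. unfold h. rewrite <- Rpower_plus. f_equal. field. Qed.

Lemma Rpower_opp_as_half_sqr : Rpower q (- mu) = / (h * h).
Proof. rewrite Rpower_Ropp, Rpower_as_half_sqr. reflexivity. Qed.

Lemma Rpower_opp_half_as_inv : Rpower q (- mu / 2) = / h.
Proof. unfold h. rewrite <- Rpower_Ropp. f_equal. field. Qed.

Lemma exponent_pred_succ : Rpower q (INR (S k) * (mu - 1 + INR (S k))) = E * (h * h) * q ^ k.
Proof.
  unfold E. rewrite <- Rpower_as_half_sqr, <- (Rpower_pow k q), <- !Rpower_plus by auto.
  f_equal. rewrite S_INR. ring.
Qed.

Lemma exponent_succ : Rpower q (INR k * (mu + 1 + INR k)) = E * q ^ k.
Proof.
  unfold E. rewrite <- (Rpower_pow k q), <- !Rpower_plus by auto. f_equal. ring.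
Qed.

Lemma exponent_succ_succ :
  Rpower q (INR (S k) * (mu + INR (S k))) = E * (h * h) * (q ^ k * q ^ k * q).
Proof.
  unfold E. rewrite <- Rpower_as_half_sqr.
  replace (q ^ k * q ^ k * q) with (q ^ (k + k + 1)) by (rewrite !pow_add; ring).
  rewrite <- (Rpower_pow _ q), <- !Rpower_plus by auto.
  f_equal. rewrite S_INR, !plus_INR. simpl. ring.
Qed.

Lemma exponent_half_succ : Rpower q ((mu + 2 * INR (S k)) / 2) = h * (q ^ k * q).
Proof.
  unfold h. replace (q ^ k * q) with (q ^ (k + 1)) by (rewrite !pow_add; ring).
  rewrite <- (Rpower_pow _ q), <- !Rpower_plus by auto.
  f_equal. rewrite plus_INR, S_INR. simpl. field.
Qed.

Lemma exponent_qGamma_succ :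
  Rpower (q ^ 2) (mu + INR k + 1) = (h * h) * (h * h) * (q ^ k * q ^ k * (q * q)).
Proof.
  rewrite Rpower_sqr_base by auto.
  replace (q ^ k * q ^ k * (q * q)) with (q ^ (k + 1) * q ^ (k + 1)) by (rewrite !pow_add; ring).
  rewrite <- Rpower_as_half_sqr, <- (Rpower_pow _ q), <- !Rpower_plus by auto.
  f_equal. rewrite plus_INR. simpl. ring.
Qed.
End ExponentNormalForms.

Section CoefficientIdentities.
Variables (q mu : R) (k : nat).
Hypotheses (hq : 0 < q < 1) (hmu : ~ is_integer mu).

Let b := q ^ 2.
Let h := Rpower q (mu / 2).
Let G := qGamma b (mu + INR k + 1).
Let P := qPoch b b k.

Let hmuk : ~ is_integer (mu + INR k + 1).
Proof.
  apply not_integer_add; [|apply (is_integer_IZR 1)].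
  apply not_integer_add; [exact hmu| apply is_integer_INR].
Qed.
Let G_neq_0 : G <> 0.
Proof. apply qGamma_neq_0, hmuk. apply sqr_lt_1, hq. Qed.
Let P_pos : 0 < P.
Proof. pose proof (sqr_lt_1 q hq). unfold P, b. apply qPoch_bounds; lra. Qed.
Let h_pos : 0 < h.
Proof. apply Rpower_pos. Qed.
Let D_neq_0 : 1 - (h * h) * (h * h) * (q ^ k * q ^ k * (q * q)) <> 0.
Proof.
  unfold h. rewrite <- exponent_qGamma_succ by lra.
  pose proof (Rpower_neq_1 (q ^ 2) (mu + INR k + 1) (sqr_lt_1 q hq) (not_integer_neq_0 _ hmuk)).
  lra.
Qed.
Let qPoch_factor_neq_0 : 1 - q ^ 2 * (q ^ 2) ^ k <> 0.
Proof.
  pose proof (sqr_lt_1 q hq). pose proof (pow_bounds (q ^ 2) k ltac:(lra)). nra.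
Qed.

Let qGamma_succ_nf : qGamma b (mu + INR k + 1 + 1) =
  G * (1 - (h * h) * (h * h) * (q ^ k * q ^ k * (q * q))) / (1 - q ^ 2).
Proof.
  unfold G. rewrite qGamma_succ by first [apply sqr_lt_1, hq| apply not_integer_neq_0, hmuk].
  unfold b. rewrite exponent_qGamma_succ by lra. reflexivity.
Qed.

Lemma I3_coef_relation_minus :
  Rpower q (- mu / 2) * I3_coef q (mu - 1) (S k) - Rpower q (mu / 2) * I3_coef q (mu + 1) k
  = 2 * (Rpower q (- mu) - Rpower q mu) / (1 - q ^ 2) *
    (I3_coef q mu (S k) * Rpower (Rpower q (1 / 2)) (mu + 2 * INR (S k)) * / 2).
Proof.
  unfold I3_coef. rewrite Rpower_Rpower_half.
  rewrite (exponent_pred_succ q mu k), (exponent_succ q mu k), (exponent_succ_succ q mu k),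
    (exponent_half_succ q mu k), (Rpower_opp_as_half_sqr q mu), (Rpower_opp_half_as_inv q mu),
    (Rpower_as_half_sqr q mu) by lra.
  replace (mu - 1 + INR (S k) + 1) with (mu + INR k + 1) by (rewrite S_INR; ring).
  replace (mu + 1 + INR k + 1) with (mu + INR k + 1 + 1) by ring.
  replace (mu + INR (S k) + 1) with (mu + INR k + 1 + 1) by (rewrite S_INR; ring).
  fold b. rewrite qGamma_succ_nf. fold G.
  simpl qPoch. fold P. unfold b. rewrite pow_sqr_base.
  pose proof qPoch_factor_neq_0 as hP. rewrite pow_sqr_base in hP. fold h.
  rewrite <- !tech_pow_Rmult.
  set (A := (1 - q ^ 2) ^ k). set (E := Rpower q (INR k * (mu + INR k))).
  set (Qk := q ^ k) in *.
  field. repeat split; try lra; try (intro; nra).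
Qed.

Lemma I3_coef_relation_plus :
  Rpower q (- mu / 2) * I3_coef q (mu - 1) (S k) + Rpower q (mu / 2) * I3_coef q (mu + 1) k
  = 4 / (1 - q ^ 2) *
    (I3_coef q mu (S k) * Rpower (Rpower q (- 1 / 2)) (mu + 2 * INR (S k)) * / 2)
    - 2 * (Rpower q (- mu) + Rpower q mu) / (1 - q ^ 2) *
    (I3_coef q mu (S k) * Rpower (Rpower q (1 / 2)) (mu + 2 * INR (S k)) * / 2).
Proof.
  unfold I3_coef. rewrite Rpower_Rpower_half, Rpower_Rpower_opp_half.
  rewrite (exponent_pred_succ q mu k), (exponent_succ q mu k), (exponent_succ_succ q mu k),
    (exponent_half_succ q mu k), (Rpower_opp_as_half_sqr q mu), (Rpower_opp_half_as_inv q mu),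
    (Rpower_as_half_sqr q mu) by lra.
  replace (mu - 1 + INR (S k) + 1) with (mu + INR k + 1) by (rewrite S_INR; ring).
  replace (mu + 1 + INR k + 1) with (mu + INR k + 1 + 1) by ring.
  replace (mu + INR (S k) + 1) with (mu + INR k + 1 + 1) by (rewrite S_INR; ring).
  fold b. rewrite qGamma_succ_nf. fold G.
  simpl qPoch. fold P. unfold b. rewrite pow_sqr_base.
  pose proof qPoch_factor_neq_0 as hP. rewrite pow_sqr_base in hP. fold h.
  rewrite <- !tech_pow_Rmult.
  set (A := (1 - q ^ 2) ^ k). set (E := Rpower q (INR k * (mu + INR k))).
  set (Qk := q ^ k) in *.
  assert (0 < Qk) by (unfold Qk; apply pow_lt; lra).
  field. repeat split; try lra; try (intro; nra).
Qed.
End CoefficientIdentities.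

Section LeadingCoefficientIdentities.
Variables (q mu : R).
Hypotheses (hq : 0 < q < 1) (hmu : ~ is_integer mu).
Let h := Rpower q (mu / 2).

Let qGamma_succ_nf : qGamma (q ^ 2) (mu + INR 0 + 1) =
  qGamma (q ^ 2) (mu - 1 + INR 0 + 1) * (1 - (h * h) * (h * h)) / (1 - q ^ 2).
Proof.
  replace (mu + INR 0 + 1) with (mu + 1) by (simpl; ring).
  replace (mu - 1 + INR 0 + 1) with mu by (simpl; ring).
  rewrite qGamma_succ by first [apply sqr_lt_1, hq| apply not_integer_neq_0, hmu].
  rewrite Rpower_sqr_base, (Rpower_as_half_sqr q mu) by lra. reflexivity.
Qed.

Let nondegenerate :
  qGamma (q ^ 2) (mu - 1 + INR 0 + 1) <> 0 /\ 1 - (h * h) * (h * h) <> 0 /\ 0 < h.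
Proof.
  split; [|split].
  - replace (mu - 1 + INR 0 + 1) with mu by (simpl; ring).
    apply qGamma_neq_0; auto. apply sqr_lt_1, hq.
  - unfold h. rewrite <- (Rpower_as_half_sqr q mu), <- Rpower_sqr_base by lra.
    pose proof (Rpower_neq_1 (q ^ 2) mu (sqr_lt_1 q hq) (not_integer_neq_0 _ hmu)). lra.
  - apply Rpower_pos.
Qed.

Lemma I3_coef_relation_minus_0 :
  Rpower q (- mu / 2) * I3_coef q (mu - 1) 0
  = 2 * (Rpower q (- mu) - Rpower q mu) / (1 - q ^ 2) *
    (I3_coef q mu 0 * Rpower (Rpower q (1 / 2)) (mu + 2 * INR 0) * / 2).
Proof.
  unfold I3_coef. rewrite Rpower_Rpower_half, qGamma_succ_nf.
  destruct nondegenerate as [H1 [H2 H3]].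
  replace ((mu + 2 * INR 0) / 2) with (mu / 2) by (simpl; field).
  rewrite (Rpower_opp_as_half_sqr q mu), (Rpower_opp_half_as_inv q mu), (Rpower_as_half_sqr q mu)
    by lra.
  fold h.
  simpl in *. replace (0 * (mu - 1 + 0)) with 0 by ring. replace (0 * (mu + 0)) with 0 by ring.
  rewrite Rpower_O by lra.
  field. repeat split; try lra; try (intro; nra).
Qed.

Lemma I3_coef_relation_plus_0 :
  Rpower q (- mu / 2) * I3_coef q (mu - 1) 0
  = 4 / (1 - q ^ 2) *
    (I3_coef q mu 0 * Rpower (Rpower q (- 1 / 2)) (mu + 2 * INR 0) * / 2)
    - 2 * (Rpower q (- mu) + Rpower q mu) / (1 - q ^ 2) *
    (I3_coef q mu 0 * Rpower (Rpower q (1 / 2)) (mu + 2 * INR 0) * / 2).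
Proof.
  unfold I3_coef. rewrite Rpower_Rpower_half, Rpower_Rpower_opp_half, qGamma_succ_nf.
  destruct nondegenerate as [H1 [H2 H3]].
  replace ((mu + 2 * INR 0) / 2) with (mu / 2) by (simpl; field).
  rewrite (Rpower_opp_as_half_sqr q mu), (Rpower_opp_half_as_inv q mu), (Rpower_as_half_sqr q mu)
    by lra.
  fold h.
  simpl in *. replace (0 * (mu - 1 + 0)) with 0 by ring. replace (0 * (mu + 0)) with 0 by ring.
  rewrite Rpower_O by lra.
  field. repeat split; try lra; try (intro; nra).
Qed.
End LeadingCoefficientIdentities.

Lemma RtoC_scal_diff (a c1 b c2 g c3 : R) (P : C) : a * c1 - b * c2 = g * c3 ->
  Cminus (Cmult (RtoC a) (Cmult (RtoC c1) P)) (Cmult (RtoC b) (Cmult (RtoC c2) P))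
  = Cmult (RtoC g) (Cmult (RtoC c3) P).
Proof.
  intro E. rewrite !Cmult_assoc, <- !RtoC_mult, <- E, RtoC_minus. ring.
Qed.

Lemma RtoC_scal_eq (a c1 g c3 : R) (P : C) : a * c1 = g * c3 ->
  Cmult (RtoC a) (Cmult (RtoC c1) P) = Cmult (RtoC g) (Cmult (RtoC c3) P).
Proof. intro E. rewrite !Cmult_assoc, <- !RtoC_mult, E. reflexivity. Qed.

Lemma RtoC_scal_sum_diff (a c1 b c2 g1 c3 g2 c4 : R) (P : C) :
  a * c1 + b * c2 = g1 * c3 - g2 * c4 ->
  Cplus (Cmult (RtoC a) (Cmult (RtoC c1) P)) (Cmult (RtoC b) (Cmult (RtoC c2) P))
  = Cminus (Cmult (RtoC g1) (Cmult (RtoC c3) P)) (Cmult (RtoC g2) (Cmult (RtoC c4) P)).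
Proof.
  intro E. rewrite !Cmult_assoc, <- !RtoC_mult.
  transitivity (Cmult (RtoC (a * c1 + b * c2)) P); [rewrite RtoC_plus; ring|].
  rewrite E, RtoC_minus. ring.
Qed.

Lemma RtoC_scal_eq_diff (a c1 g1 c3 g2 c4 : R) (P : C) : a * c1 = g1 * c3 - g2 * c4 ->
  Cmult (RtoC a) (Cmult (RtoC c1) P) =
  Cminus (Cmult (RtoC g1) (Cmult (RtoC c3) P)) (Cmult (RtoC g2) (Cmult (RtoC c4) P)).
Proof. intro E. rewrite !Cmult_assoc, <- !RtoC_mult, E, RtoC_minus. ring. Qed.

(* Term [k + 1] of [I_(mu-1)] is matched with term [k] of [I_(mu+1)], and term [0] of
   [I_(mu-1)] alone with term [0] on the right. *)
Section I3Relations.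
Variables (q mu : R) (z : C).
Hypotheses (hq : 0 < q < 1) (hmu : ~ is_integer mu) (hz : slit z).
Let z1 := Cmult (RtoC (Rpower q (1 / 2))) z.
Let z2 := Cmult (RtoC (Rpower q (- 1 / 2))) z.

Let z1_slit : slit z1.
Proof. apply slit_scal; [apply Rpower_pos| exact hz]. Qed.
Let z2_slit : slit z2.
Proof. apply slit_scal; [apply Rpower_pos| exact hz]. Qed.

Lemma I3_relation_minus :
  Cminus (Cmult (RtoC (Rpower q (- mu / 2))) (I3 q (mu - 1) z))
         (Cmult (RtoC (Rpower q (mu / 2))) (I3 q (mu + 1) z))
  = Cmult (RtoC (2 * (Rpower q (- mu) - Rpower q mu) / (1 - q ^ 2)))
          (Cmult (Cinv z) (I3 q mu z1)).
Proof.
  set (a := Rpower q (- mu / 2)). set (b := Rpower q (mu / 2)).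
  set (g := 2 * (Rpower q (- mu) - Rpower q mu) / (1 - q ^ 2)).
  set (X := fun k => Cmult (RtoC a) (I3_term q (mu - 1) z k)).
  set (Y := fun k => Cmult (RtoC b) (I3_term q (mu + 1) z k)).
  set (Z := fun k => Cmult (RtoC g) (Cmult (Cinv z) (I3_term q mu z1 k))).
  assert (cX : ex_CSeries X) by (apply ex_CSeries_scal, ex_CSeries_I3_term; auto).
  assert (cY : ex_CSeries Y) by (apply ex_CSeries_scal, ex_CSeries_I3_term; auto).
  assert (cZ : ex_CSeries Z) by (apply ex_CSeries_scal, ex_CSeries_scal, ex_CSeries_I3_term; auto).
  rewrite !I3_CSeries.
  rewrite <- (CSeries_scal _ (I3_term q mu z1)) by (apply ex_CSeries_I3_term; auto).
  rewrite <- (CSeries_scal (RtoC g)) by (apply ex_CSeries_scal, ex_CSeries_I3_term; auto).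
  rewrite <- !CSeries_scal by (apply ex_CSeries_I3_term; auto).
  fold X Y Z. rewrite (CSeries_incr_1 X cX), (CSeries_incr_1 Z cZ).
  assert (E0 : X 0%nat = Z 0%nat).
  { unfold X, Z, z1. rewrite Cinv_mult_I3_term_scal, !I3_term_coef by (auto; apply Rpower_pos).
    replace (mu - 1 + 2 * INR 0) with (mu + 2 * INR 0 - 1) by ring.
    apply RtoC_scal_eq. apply I3_coef_relation_minus_0; auto. }
  assert (ES : forall k, Cminus (X (S k)) (Y k) = Z (S k)).
  { intro k. unfold X, Y, Z, z1.
    rewrite Cinv_mult_I3_term_scal, !I3_term_coef by (auto; apply Rpower_pos).
    replace (mu - 1 + 2 * INR (S k)) with (mu + 1 + 2 * INR k) by (rewrite S_INR; ring).
    replace (mu + 2 * INR (S k) - 1) with (mu + 1 + 2 * INR k) by (rewrite S_INR; ring).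
    apply RtoC_scal_diff. apply I3_coef_relation_minus; auto. }
  rewrite <- (CSeries_ext _ _ ES), CSeries_minus, E0 by (auto; apply ex_CSeries_succ, cX).
  ring.
Qed.

Lemma I3_relation_plus :
  Cplus (Cmult (RtoC (Rpower q (- mu / 2))) (I3 q (mu - 1) z))
        (Cmult (RtoC (Rpower q (mu / 2))) (I3 q (mu + 1) z))
  = Cminus (Cmult (RtoC (4 / (1 - q ^ 2))) (Cmult (Cinv z) (I3 q mu z2)))
           (Cmult (RtoC (2 * (Rpower q (- mu) + Rpower q mu) / (1 - q ^ 2)))
                  (Cmult (Cinv z) (I3 q mu z1))).
Proof.
  set (a := Rpower q (- mu / 2)). set (b := Rpower q (mu / 2)).
  set (g1 := 4 / (1 - q ^ 2)).
  set (g2 := 2 * (Rpower q (- mu) + Rpower q mu) / (1 - q ^ 2)).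
  set (X := fun k => Cmult (RtoC a) (I3_term q (mu - 1) z k)).
  set (Y := fun k => Cmult (RtoC b) (I3_term q (mu + 1) z k)).
  set (Z1 := fun k => Cmult (RtoC g1) (Cmult (Cinv z) (I3_term q mu z2 k))).
  set (Z2 := fun k => Cmult (RtoC g2) (Cmult (Cinv z) (I3_term q mu z1 k))).
  set (W := fun k => Cminus (Z1 k) (Z2 k)).
  assert (cX : ex_CSeries X) by (apply ex_CSeries_scal, ex_CSeries_I3_term; auto).
  assert (cY : ex_CSeries Y) by (apply ex_CSeries_scal, ex_CSeries_I3_term; auto).
  assert (cZ1 : ex_CSeries Z1) by (apply ex_CSeries_scal, ex_CSeries_scal, ex_CSeries_I3_term; auto).
  assert (cZ2 : ex_CSeries Z2) by (apply ex_CSeries_scal, ex_CSeries_scal, ex_CSeries_I3_term; auto).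
  assert (cW : ex_CSeries W) by (apply ex_CSeries_minus; auto).
  rewrite !I3_CSeries.
  rewrite <- (CSeries_scal _ (I3_term q mu z1)) by (apply ex_CSeries_I3_term; auto).
  rewrite <- (CSeries_scal _ (I3_term q mu z2)) by (apply ex_CSeries_I3_term; auto).
  rewrite <- (CSeries_scal (RtoC g1)) by (apply ex_CSeries_scal, ex_CSeries_I3_term; auto).
  rewrite <- (CSeries_scal (RtoC g2)) by (apply ex_CSeries_scal, ex_CSeries_I3_term; auto).
  rewrite <- !CSeries_scal by (apply ex_CSeries_I3_term; auto).
  fold X Y Z1 Z2. rewrite <- CSeries_minus by auto. fold W.
  rewrite (CSeries_incr_1 X cX), (CSeries_incr_1 W cW).
  assert (E0 : X 0%nat = W 0%nat).
  { unfold W, X, Z1, Z2, z1, z2.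
    rewrite !Cinv_mult_I3_term_scal, !I3_term_coef by (auto; apply Rpower_pos).
    replace (mu - 1 + 2 * INR 0) with (mu + 2 * INR 0 - 1) by ring.
    apply RtoC_scal_eq_diff. apply I3_coef_relation_plus_0; auto. }
  assert (ES : forall k, Cplus (X (S k)) (Y k) = W (S k)).
  { intro k. unfold W, X, Y, Z1, Z2, z1, z2.
    rewrite !Cinv_mult_I3_term_scal, !I3_term_coef by (auto; apply Rpower_pos).
    replace (mu - 1 + 2 * INR (S k)) with (mu + 1 + 2 * INR k) by (rewrite S_INR; ring).
    replace (mu + 2 * INR (S k) - 1) with (mu + 1 + 2 * INR k) by (rewrite S_INR; ring).
    apply RtoC_scal_sum_diff. apply I3_coef_relation_plus; auto. }
  rewrite <- (CSeries_ext _ _ ES), CSeries_plus, E0 by (auto; apply ex_CSeries_succ, cX).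
  ring.
Qed.
End I3Relations.

Definition K3_factor (q nu : R) : R :=
  / 2 * Rpower q (- nu ^ 2 + nu) * qGamma (q ^ 2) nu * qGamma (q ^ 2) (1 - nu).

Lemma K3_nonint_factor (q nu : R) (z : C) :
  K3_nonint q nu z = Cmult (RtoC (K3_factor q nu)) (Cminus (I3 q (- nu) z) (I3 q nu z)).
Proof. reflexivity. Qed.

Section K3FactorShift.
Variables (q nu : R).
Hypotheses (hq : 0 < q < 1) (hnu : ~ is_integer nu).
Let u := Rpower q nu.
Let u_pos : 0 < u.
Proof. apply Rpower_pos. Qed.

Let hb : 0 < q ^ 2 < 1.
Proof. apply sqr_lt_1, hq. Qed.

Let hnu_pred : nu - 1 <> 0.
Proof.
  replace (nu - 1) with (nu + IZR (-1)) by (simpl; ring).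
  apply not_integer_neq_0, not_integer_add, is_integer_IZR; auto.
Qed.

Let Rpower_q_pred (x : R) : Rpower q (x - 1) = Rpower q x * / q.
Proof. unfold Rminus. rewrite Rpower_plus, Rpower_Ropp, Rpower_1 by lra. reflexivity. Qed.

Lemma K3_factor_succ : K3_factor q (nu + 1) = - K3_factor q nu.
Proof.
  unfold K3_factor. replace (1 - (nu + 1)) with (- nu) by ring.
  rewrite qGamma_succ by (auto; apply not_integer_neq_0; auto).
  replace (1 - nu) with (- nu + 1) by ring.
  rewrite qGamma_succ by (auto; apply not_integer_neq_0, not_integer_opp; auto).
  rewrite !Rpower_sqr_base, Rpower_Ropp by lra.
  replace (- (nu + 1) ^ 2 + (nu + 1)) with ((- nu ^ 2 + nu) + - nu + - nu) by ring.
  rewrite !Rpower_plus, !Rpower_Ropp. fold u.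
  assert (huu : u * u <> 1).
  { unfold u. rewrite <- Rpower_sqr_base by lra.
    apply Rpower_neq_1; auto; apply not_integer_neq_0; auto. }
  assert (1 - / u * / u <> 0).
  { rewrite <- Rinv_mult. intro E. apply huu. rewrite <- (Rinv_inv (u * u)).
    replace (/ (u * u)) with 1 by lra. apply Rinv_1. }
  field. repeat split; try lra; try (intro; nra); apply Rgt_not_eq, Rpower_pos.
Qed.

Lemma K3_factor_pred : K3_factor q (nu - 1) = - K3_factor q nu.
Proof.
  unfold K3_factor.
  replace (1 - (nu - 1)) with ((1 - nu) + 1) by ring.
  rewrite qGamma_succ by (auto; intro E; apply hnu_pred; lra).
  assert (EG : qGamma (q ^ 2) nu
    = qGamma (q ^ 2) (nu - 1) * (1 - Rpower (q ^ 2) (nu - 1)) / (1 - q ^ 2)).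
  { replace nu with (nu - 1 + 1) at 1 by ring. apply qGamma_succ; auto. }
  rewrite EG.
  assert (E1 : Rpower (q ^ 2) (nu - 1) = u * u * / (q * q)).
  { rewrite Rpower_sqr_base, Rpower_q_pred by lra. fold u. field. lra. }
  assert (E2 : Rpower (q ^ 2) (1 - nu) = q * q * / (u * u)).
  { rewrite Rpower_sqr_base by lra. unfold Rminus.
    rewrite Rpower_plus, Rpower_1, Rpower_Ropp by lra. fold u. field. lra. }
  rewrite E1, E2.
  replace (- (nu - 1) ^ 2 + (nu - 1)) with ((- nu ^ 2 + nu) + nu + nu - 1 - 1) by ring.
  rewrite !Rpower_q_pred, !Rpower_plus. fold u.
  assert (u * u * / (q * q) <> 1).
  { rewrite <- E1. apply Rpower_neq_1; auto. }
  assert (q * q * / (u * u) <> 1).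
  { rewrite <- E2. apply Rpower_neq_1; auto. intro E; apply hnu_pred; lra. }
  assert (1 - u * u * / (q * q) <> 0) by lra.
  assert (1 - q * q * / (u * u) <> 0) by lra.
  field. repeat split; try lra; try (intro; nra); apply Rgt_not_eq, Rpower_pos.
Qed.
End K3FactorShift.

Lemma RtoC_neq_0 (x : R) : x <> 0 -> RtoC x <> RtoC 0.
Proof. intros h E. apply h. injection E. auto. Qed.

Section K3NonintRelations.
Variables (q nu : R) (z : C).
Hypotheses (hq : 0 < q < 1) (hnu : ~ is_integer nu) (hz : slit z).
Let z1 := Cmult (RtoC (Rpower q (1 / 2))) z.
Let z2 := Cmult (RtoC (Rpower q (- 1 / 2))) z.

Lemma K3_nonint_relation_minus :
  Cminus (Cmult (RtoC (Rpower q (- nu / 2))) (K3_nonint q (nu - 1) z))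
         (Cmult (RtoC (Rpower q (nu / 2))) (K3_nonint q (nu + 1) z))
  = Cmult (RtoC (- 2 * (Rpower q (- nu) - Rpower q nu)))
      (Cmult (Cinv (Cmult (RtoC (1 - q ^ 2)) z)) (K3_nonint q nu z1)).
Proof.
  rewrite !K3_nonint_factor, K3_factor_succ, K3_factor_pred by auto.
  replace (- (nu - 1)) with (- nu + 1) by ring.
  replace (- (nu + 1)) with (- nu - 1) by ring.
  pose proof (I3_relation_minus q nu z hq hnu hz) as Rnu.
  pose proof (I3_relation_minus q (- nu) z hq (not_integer_opp _ hnu) hz) as Ropp.
  replace (- - nu / 2) with (nu / 2) in Ropp by field.
  replace (- - nu) with nu in Ropp by ring.
  fold z1 in Rnu, Ropp.
  set (p := Rpower q (- nu / 2)) in *. set (p' := Rpower q (nu / 2)) in *.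
  transitivity (Cmult (RtoC (- K3_factor q nu))
    (Cminus (Copp (Cminus (Cmult (RtoC p') (I3 q (- nu - 1) z)) (Cmult (RtoC p) (I3 q (- nu + 1) z))))
            (Cminus (Cmult (RtoC p) (I3 q (nu - 1) z)) (Cmult (RtoC p') (I3 q (nu + 1) z))))).
  { ring. }
  rewrite Rnu, Ropp.
  assert (hD : 1 - q ^ 2 <> 0) by (intro; nra).
  pose proof (slit_neq_0 z hz). pose proof (RtoC_neq_0 _ hD).
  rewrite !RtoC_div by auto.
  set (D := RtoC (1 - q ^ 2)) in *.
  rewrite !RtoC_mult, !RtoC_minus, !RtoC_opp.
  field; auto.
Qed.

Lemma K3_nonint_relation_plus :
  Cplus (Cmult (RtoC (Rpower q (- nu / 2))) (K3_nonint q (nu - 1) z))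
        (Cmult (RtoC (Rpower q (nu / 2))) (K3_nonint q (nu + 1) z))
  = Cplus
      (Cmult (RtoC (- 4))
        (Cmult (Cinv (Cmult (RtoC (1 - q ^ 2)) z)) (K3_nonint q nu z2)))
      (Cmult (RtoC (2 * (Rpower q (- nu) + Rpower q nu)))
        (Cmult (Cinv (Cmult (RtoC (1 - q ^ 2)) z)) (K3_nonint q nu z1))).
Proof.
  rewrite !K3_nonint_factor, K3_factor_succ, K3_factor_pred by auto.
  replace (- (nu - 1)) with (- nu + 1) by ring.
  replace (- (nu + 1)) with (- nu - 1) by ring.
  pose proof (I3_relation_plus q nu z hq hnu hz) as Rnu.
  pose proof (I3_relation_plus q (- nu) z hq (not_integer_opp _ hnu) hz) as Ropp.
  replace (- - nu / 2) with (nu / 2) in Ropp by field.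
  replace (- - nu) with nu in Ropp by ring.
  fold z1 z2 in Rnu, Ropp.
  set (p := Rpower q (- nu / 2)) in *. set (p' := Rpower q (nu / 2)) in *.
  transitivity (Cmult (RtoC (- K3_factor q nu))
    (Cminus (Cplus (Cmult (RtoC p') (I3 q (- nu - 1) z)) (Cmult (RtoC p) (I3 q (- nu + 1) z)))
            (Cplus (Cmult (RtoC p) (I3 q (nu - 1) z)) (Cmult (RtoC p') (I3 q (nu + 1) z))))).
  { ring. }
  rewrite Rnu, Ropp.
  assert (hD : 1 - q ^ 2 <> 0) by (intro; nra).
  pose proof (slit_neq_0 z hz). pose proof (RtoC_neq_0 _ hD).
  rewrite !RtoC_div by auto.
  set (D := RtoC (1 - q ^ 2)) in *.
  rewrite !RtoC_mult, !RtoC_plus, !RtoC_opp.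
  field; auto.
Qed.
End K3NonintRelations.

(** * Termwise differentiation *)

Lemma is_derive_Rmult (f g : R -> R) (x df dg : R) : is_derive f x df -> is_derive g x dg ->
  is_derive (fun y => f y * g y) x (df * g x + f x * dg).
Proof. intros h1 h2. exact (is_derive_mult f g x df dg h1 h2 Rmult_comm). Qed.

Lemma is_derive_Rconst (c x : R) : is_derive (fun _ => c) x 0.
Proof. exact (is_derive_const c x). Qed.

Lemma is_derive_replace (f g : R -> R) (x d d' : R) :
  (forall y, f y = g y) -> d = d' -> is_derive f x d -> is_derive g x d'.
Proof. intros E <- h. exact (is_derive_ext f g x d E h). Qed.

Lemma is_derive_Rpower (b x : R) : is_derive (fun y => Rpower b y) x (ln b * Rpower b x).
Proof. unfold Rpower. auto_derive; auto. ring. Qed.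

Lemma is_derive_shift (f : R -> R) (c x d : R) :
  is_derive f (x + c) d -> is_derive (fun y => f (y + c)) x d.
Proof.
  intro h.
  assert (hg : is_derive (fun y : R => y + c) x 1) by (auto_derive; auto).
  exact (is_derive_replace _ _ _ _ _ (fun y => eq_refl) (Rmult_1_l d)
           (is_derive_comp f (fun y => y + c) x d 1 h hg)).
Qed.

Lemma is_derive_sum_f_R0 (f df : nat -> R -> R) (x : R) (N : nat) :
  (forall k, is_derive (f k) x (df k x)) ->
  is_derive (fun y => sum_f_R0 (fun k => f k y) N) x (sum_f_R0 (fun k => df k x) N).
Proof.
  intro H. induction N as [|N IH]; simpl; auto.
  apply (is_derive_plus (fun y => sum_f_R0 (fun k => f k y) N) (f (S N))); auto.
Qed.

Lemma sum_f_R0_diff_quot (a b c : nat -> R) (h : R) (N : nat) : h <> 0 ->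
  sum_f_R0 (fun k => (a k - b k) / h - c k) N =
  (sum_f_R0 a N - sum_f_R0 b N) / h - sum_f_R0 c N.
Proof. intro hh. induction N as [|N IH]; simpl; auto. rewrite IH. field. auto. Qed.

Section TermwiseDerivative.
Variables (f df : nat -> R -> R) (M : nat -> R) (x0 delta : R).
Hypotheses (hdelta : 0 < delta)
  (hder : forall k x, Rabs (x - x0) < delta -> is_derive (f k) x (df k x))
  (hbd : forall k x, Rabs (x - x0) < delta -> Rabs (df k x) <= M k)
  (hM : ex_series M)
  (hf0 : ex_series (fun k => f k x0)).

Let near_x0 : Rabs (x0 - x0) < delta.
Proof. rewrite Rminus_diag, Rabs_R0. exact hdelta. Qed.

Let Rabs_diff_le (k : nat) (x : R) : Rabs (x - x0) < delta ->
  Rabs (f k x - f k x0) <= M k * Rabs (x - x0).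
Proof.
  intro hx. apply (bounded_variation (f k) (df k)).
  intros t ht. split; [apply hder| apply hbd]; lra.
Qed.

Let ex_series_at (x : R) : Rabs (x - x0) < delta -> ex_series (fun k => f k x).
Proof.
  intro hx.
  assert (ex_series (fun k => f k x - f k x0)).
  { apply ex_series_Rabs, (ex_series_R_le _ (fun k => Rabs (x - x0) * M k)).
    - intro k. rewrite Rabs_Rabsolu, Rmult_comm. apply Rabs_diff_le, hx.
    - apply ex_series_R_scal, hM. }
  apply (ex_series_R_ext (fun k => (f k x - f k x0) + f k x0)); [intro; ring|].
  apply ex_series_R_plus; auto.
Qed.

Let ex_series_df : ex_series (fun k => df k x0).
Proof.
  apply ex_series_Rabs, (ex_series_R_le _ M); auto.
  intro k. rewrite Rabs_Rabsolu. apply hbd, near_x0.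
Qed.

Let diff_quot (h : R) (k : nat) := (f k (x0 + h) - f k x0) / h - df k x0.

Let Rabs_diff_quot_le (h : R) (k : nat) : Rabs h < delta -> h <> 0 ->
  Rabs (diff_quot h k) <= 2 * M k.
Proof.
  intros hh h0. unfold diff_quot.
  assert (hx : Rabs (x0 + h - x0) < delta) by (replace (x0 + h - x0) with h by ring; auto).
  pose proof (Rabs_diff_le k (x0 + h) hx) as Hb. replace (x0 + h - x0) with h in Hb by ring.
  pose proof (hbd k x0 near_x0) as Hd.
  eapply Rle_trans; [apply Rabs_triang|]. rewrite Rabs_Ropp.
  unfold Rdiv. rewrite Rabs_mult, Rabs_inv.
  assert (0 < Rabs h) by (apply Rabs_pos_lt; auto).
  assert (Rabs (f k (x0 + h) - f k x0) * / Rabs h <= M k).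
  { apply (Rmult_le_reg_r (Rabs h)); auto. rewrite Rmult_assoc, Rinv_l by lra. lra. }
  lra.
Qed.

Let Series_diff_quot (h : R) : Rabs h < delta -> h <> 0 ->
  ex_series (fun k => Rabs (diff_quot h k)) /\
  (Series (fun k => f k (x0 + h)) - Series (fun k => f k x0)) / h - Series (fun k => df k x0)
  = Series (diff_quot h).
Proof.
  intros hh h0.
  assert (hx : Rabs (x0 + h - x0) < delta) by (replace (x0 + h - x0) with h by ring; auto).
  assert (hquot : ex_series (fun k => (f k (x0 + h) - f k x0) / h)).
  { apply (ex_series_R_ext (fun k => / h * (f k (x0 + h) - f k x0))); [intro; unfold Rdiv; ring|].
    apply ex_series_R_scal, ex_series_R_minus; auto. }
  split.
  - apply (ex_series_R_le _ (fun k => 2 * M k)); [|apply ex_series_R_scal, hM].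
    intro k. rewrite Rabs_Rabsolu. apply Rabs_diff_quot_le; auto.
  - unfold diff_quot.
    rewrite (Series_minus (fun k => (f k (x0 + h) - f k x0) / h) (fun k => df k x0)) by auto.
    rewrite (Series_ext (fun k => (f k (x0 + h) - f k x0) / h)
               (fun k => / h * (f k (x0 + h) - f k x0))) by (intro; unfold Rdiv; ring).
    rewrite Series_scal_l, Series_minus by auto. unfold Rdiv. ring.
Qed.

(* Split the difference quotient at an index [N] beyond which [M] has a tail below [eps/8]:
   the tail contributes at most [2 * eps/8], the finite sum is differentiable. *)
Lemma is_derive_Series :
  is_derive (fun x => Series (fun k => f k x)) x0 (Series (fun k => df k x0)).
Proof.
  apply is_derive_Reals. intros eps heps.
  pose proof (Series_correct _ hM) as HS. apply is_series_Reals in HS.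
  destruct (HS (eps / 8)) as [N HN]; [lra|].
  assert (htail : Series (fun k => M (S N + k)%nat) < eps / 8).
  { specialize (HN N (le_n N)).
    rewrite (Series_incr_n M (S N)) in HN by (auto; lia). simpl pred in HN. unfold R_dist in HN.
    set (T := Series (fun k => M (S N + k)%nat)) in *.
    replace (sum_f_R0 M N - (sum_f_R0 M N + T)) with (- T) in HN by ring.
    rewrite Rabs_Ropp in HN. pose proof (Rle_abs T). lra. }
  pose proof (is_derive_sum_f_R0 f df x0 N (fun k => hder k x0 near_x0)) as hGN.
  apply is_derive_Reals in hGN.
  destruct (hGN (eps / 2)) as [d1 hd1]; [lra|].
  exists (mkposreal (Rmin d1 delta) (Rmin_pos _ _ (cond_pos d1) hdelta)).
  intros h h0 hh. simpl in hh.
  assert (hhd : Rabs h < delta) by (eapply Rlt_le_trans; [exact hh| apply Rmin_r]).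
  assert (hhd1 : Rabs h < d1) by (eapply Rlt_le_trans; [exact hh| apply Rmin_l]).
  destruct (Series_diff_quot h hhd h0) as [hex ->].
  rewrite (Series_incr_n (diff_quot h) (S N)) by (lia || exact (ex_series_Rabs _ hex)).
  simpl pred.
  assert (Htl : Rabs (Series (fun k => diff_quot h (S N + k)%nat))
                <= 2 * Series (fun k => M (S N + k)%nat)).
  { eapply Rle_trans.
    { apply Series_Rabs. exact (proj1 (ex_series_incr_n (fun k => Rabs (diff_quot h k)) (S N)) hex). }
    rewrite <- Series_scal_l. apply Series_le.
    - intro k. split; [apply Rabs_pos| apply Rabs_diff_quot_le; auto].
    - apply ex_series_R_scal. exact (proj1 (ex_series_incr_n M (S N)) hM). }
  assert (Hfin : Rabs (sum_f_R0 (diff_quot h) N) < eps / 2).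
  { unfold diff_quot. rewrite sum_f_R0_diff_quot by auto. exact (hd1 h h0 hhd1). }
  eapply Rle_lt_trans; [apply Rabs_triang|]. lra.
Qed.
End TermwiseDerivative.

Section qPochInfPowDerivative.
Variables (b : R).
Hypothesis hb : 0 < b < 1.

Definition qPoch_pow (x : R) (n : nat) := qPoch (Rpower b x) b n.

Fixpoint qPoch_pow_deriv (x : R) (n : nat) : R :=
  match n with
  | O => 0
  | S n' => qPoch_pow_deriv x n' * (1 - Rpower b x * b ^ n')
            - qPoch_pow x n' * (ln b * Rpower b x * b ^ n')
  end.

Lemma is_derive_qPoch_pow (n : nat) (x : R) :
  is_derive (fun y => qPoch_pow y n) x (qPoch_pow_deriv x n).
Proof.
  induction n as [|n IH].
  - exact (is_derive_Rconst 1 x).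
  - apply (is_derive_replace (fun y => qPoch_pow y n * (1 - Rpower b y * b ^ n)) _ _
      (qPoch_pow_deriv x n * (1 - Rpower b x * b ^ n)
       + qPoch_pow x n * (0 - (ln b * Rpower b x * b ^ n + Rpower b x * 0))));
      [reflexivity| simpl; ring|].
    apply (is_derive_Rmult (fun y => qPoch_pow y n) (fun y => 1 - Rpower b y * b ^ n)); auto.
    apply (is_derive_minus (fun _ => 1) (fun y => Rpower b y * b ^ n)); [apply is_derive_Rconst|].
    apply (is_derive_Rmult (fun y => Rpower b y) (fun _ => b ^ n));
      [apply is_derive_Rpower| apply is_derive_Rconst].
Qed.

(* On [x >= 1/4] all factors [1 - b^(x+j)] lie in [[1 - beta, 1]] with [beta = b^(1/4)];
   the derivative is needed on [x >= 1/2], within distance [1/4]. *)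
Let lb := Rabs (ln b).
Let beta := Rpower b (1 / 4).

Let beta_bounds : 0 < beta < 1.
Proof. split; [apply Rpower_pos| apply Rpower_lt_1; lra]. Qed.

Let Rpower_le_beta (x : R) : 1 / 4 <= x -> 0 < Rpower b x <= beta.
Proof.
  intro hx. split; [apply Rpower_pos|]. unfold beta, Rpower. apply exp_le_mono.
  pose proof (ln_lt_0 b hb). nra.
Qed.

Let qPoch_pow_bounds (x : R) (n : nat) : 1 / 4 <= x -> 0 < qPoch_pow x n <= 1.
Proof.
  intro hx. pose proof (Rpower_le_beta x hx). pose proof beta_bounds.
  apply qPoch_bounds; lra.
Qed.

Let Rabs_qPoch_pow_deriv_le (x : R) (n : nat) : 1 / 4 <= x ->
  Rabs (qPoch_pow_deriv x n) <= lb * beta * (1 - b ^ n) / (1 - b).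
Proof.
  intro hx. pose proof (Rpower_le_beta x hx) as Hp. pose proof beta_bounds.
  assert (hlb : 0 <= lb) by apply Rabs_pos.
  induction n as [|n IH].
  - simpl. rewrite Rabs_R0. right; field; lra.
  - simpl qPoch_pow_deriv. pose proof (qPoch_pow_bounds x n hx).
    pose proof (pow_bounds b n ltac:(lra)).
    assert (0 <= 1 - Rpower b x * b ^ n <= 1) by nra.
    eapply Rle_trans; [apply Rabs_triang|]. rewrite Rabs_Ropp, !Rabs_mult.
    rewrite (Rabs_pos_eq (1 - _)), (Rabs_pos_eq (qPoch_pow x n)), (Rabs_pos_eq (Rpower b x)),
      (Rabs_pos_eq (b ^ n)) by lra.
    fold lb.
    assert (Rabs (qPoch_pow_deriv x n) * (1 - Rpower b x * b ^ n)
            <= lb * beta * (1 - b ^ n) / (1 - b)).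
    { pose proof (Rabs_pos (qPoch_pow_deriv x n)). nra. }
    assert (qPoch_pow x n * (lb * Rpower b x * b ^ n) <= lb * beta * b ^ n).
    { assert (0 <= lb * Rpower b x * b ^ n) by (apply Rmult_le_pos; [apply Rmult_le_pos|]; lra).
      assert (lb * Rpower b x * b ^ n <= lb * beta * b ^ n).
      { apply Rmult_le_compat_r; [lra|]. apply Rmult_le_compat_l; lra. }
      nra. }
    replace (lb * beta * (1 - b ^ S n) / (1 - b))
      with (lb * beta * (1 - b ^ n) / (1 - b) + lb * beta * b ^ n) by (simpl; field; lra).
    lra.
Qed.

Definition qPoch_pow_step (n : nat) (x : R) := - (Rpower b x * b ^ n * qPoch_pow x n).

Definition qPoch_pow_step_deriv (n : nat) (x : R) :=
  - (ln b * Rpower b x * b ^ n * qPoch_pow x n + Rpower b x * b ^ n * qPoch_pow_deriv x n).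

Let CQ := lb * beta + beta * (lb * beta / (1 - b)).

Lemma is_derive_qPoch_pow_step (n : nat) (x : R) :
  is_derive (qPoch_pow_step n) x (qPoch_pow_step_deriv n x).
Proof.
  unfold qPoch_pow_step, qPoch_pow_step_deriv.
  apply (is_derive_opp (fun y => Rpower b y * b ^ n * qPoch_pow y n)).
  apply (is_derive_replace (fun y => (Rpower b y * b ^ n) * qPoch_pow y n) _ _
     ((ln b * Rpower b x * b ^ n + Rpower b x * 0) * qPoch_pow x n
      + Rpower b x * b ^ n * qPoch_pow_deriv x n)); [reflexivity| ring|].
  apply (is_derive_Rmult (fun y => Rpower b y * b ^ n) (fun y => qPoch_pow y n));
    [|apply is_derive_qPoch_pow].
  apply (is_derive_Rmult (fun y => Rpower b y) (fun _ => b ^ n));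
    [apply is_derive_Rpower| apply is_derive_Rconst].
Qed.

Let Rabs_qPoch_pow_step_deriv_le (n : nat) (x : R) : 1 / 4 <= x ->
  Rabs (qPoch_pow_step_deriv n x) <= CQ * b ^ n.
Proof.
  intro hx. pose proof (Rpower_le_beta x hx) as Hp. pose proof beta_bounds.
  pose proof (qPoch_pow_bounds x n hx). pose proof (Rabs_qPoch_pow_deriv_le x n hx).
  assert (hlb : 0 <= lb) by apply Rabs_pos.
  pose proof (pow_bounds b n ltac:(lra)).
  unfold qPoch_pow_step_deriv, CQ. rewrite Rabs_Ropp. eapply Rle_trans; [apply Rabs_triang|].
  rewrite !Rabs_mult. fold lb.
  rewrite (Rabs_pos_eq (qPoch_pow x n)), (Rabs_pos_eq (Rpower b x)), (Rabs_pos_eq (b ^ n)) by lra.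
  assert (lb * Rpower b x * b ^ n * qPoch_pow x n <= lb * beta * b ^ n).
  { assert (0 <= lb * Rpower b x * b ^ n) by (apply Rmult_le_pos; [apply Rmult_le_pos|]; lra).
    assert (lb * Rpower b x * b ^ n <= lb * beta * b ^ n).
    { apply Rmult_le_compat_r; [lra|]. apply Rmult_le_compat_l; lra. }
    nra. }
  assert (Rabs (qPoch_pow_deriv x n) <= lb * beta / (1 - b)).
  { eapply Rle_trans; [eauto|]. unfold Rdiv. apply Rmult_le_compat_r.
    - apply Rlt_le, Rinv_0_lt_compat; lra.
    - assert (0 <= lb * beta) by (apply Rmult_le_pos; lra). nra. }
  pose proof (Rabs_pos (qPoch_pow_deriv x n)).
  assert (Rpower b x * b ^ n * Rabs (qPoch_pow_deriv x n) <= beta * b ^ n * (lb * beta / (1 - b))).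
  { apply Rmult_le_compat; try lra. apply Rmult_le_pos; lra. apply Rmult_le_compat_r; lra. }
  nra.
Qed.

Lemma qPochInf_pow_telescoping (x : R) : 0 < x ->
  qPochInf_pow b x = 1 + Series (fun n => qPoch_pow_step n x).
Proof.
  intro hx. destruct (qPochInf_pow_spec b x hb hx) as [Hl _].
  assert (Htel : forall N, sum_f_R0 (fun n => qPoch_pow_step n x) N = qPoch_pow x (S N) - 1).
  { intro N. induction N as [|N IH].
    - unfold qPoch_pow_step, qPoch_pow. simpl. ring.
    - simpl sum_f_R0. rewrite IH. unfold qPoch_pow_step, qPoch_pow. simpl qPoch.
      rewrite <- !tech_pow_Rmult. ring. }
  assert (His : is_series (fun n => qPoch_pow_step n x) (qPochInf_pow b x - 1)).
  { apply is_series_Reals. intros eps heps.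
    apply is_lim_seq_spec in Hl. destruct (Hl (mkposreal eps heps)) as [N HN].
    exists N. intros n hn. unfold R_dist. rewrite Htel.
    replace (qPoch_pow x (S n) - 1 - (qPochInf_pow b x - 1))
      with (qPoch_pow x (S n) - qPochInf_pow b x) by ring.
    apply (HN (S n)). lia. }
  rewrite (is_series_unique _ _ His). ring.
Qed.

Definition qPochInf_pow_deriv (x : R) := Series (fun n => qPoch_pow_step_deriv n x).

Let ex_series_CQ_geom : ex_series (fun n => CQ * b ^ n).
Proof. apply ex_series_R_scal, ex_series_geom. rewrite Rabs_pos_eq; lra. Qed.

Lemma is_derive_qPochInf_pow (x0 : R) : 1 / 2 <= x0 ->
  is_derive (qPochInf_pow b) x0 (qPochInf_pow_deriv x0).
Proof.
  intro hx0.
  assert (hf0 : ex_series (fun n => qPoch_pow_step n x0)).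
  { apply (ex_series_R_le _ (fun n => b ^ n)); [|apply ex_series_geom; rewrite Rabs_pos_eq; lra].
    intro n. unfold qPoch_pow_step. rewrite Rabs_Ropp, !Rabs_mult.
    pose proof (Rpower_le_beta x0 ltac:(lra)). pose proof beta_bounds.
    pose proof (qPoch_pow_bounds x0 n ltac:(lra)). pose proof (pow_bounds b n ltac:(lra)).
    rewrite !Rabs_pos_eq by lra.
    assert (Rpower b x0 * b ^ n <= 1 * b ^ n) by (apply Rmult_le_compat_r; lra).
    assert (0 < Rpower b x0 * b ^ n) by nra. nra. }
  apply (is_derive_ext_loc (fun x => 1 + Series (fun n => qPoch_pow_step n x))).
  { exists (mkposreal (1 / 4) ltac:(lra)). intros y hy. simpl in hy.
    unfold ball in hy. simpl in hy. unfold AbsRing_ball, abs, minus, plus, opp in hy. simpl in hy.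
    apply Rabs_def2 in hy. rewrite qPochInf_pow_telescoping; auto. lra. }
  apply (is_derive_replace (fun x => 1 + Series (fun n => qPoch_pow_step n x)) _ _
           (0 + qPochInf_pow_deriv x0)); [reflexivity| ring|].
  apply (is_derive_plus (fun _ => 1) (fun x => Series (fun n => qPoch_pow_step n x)));
    [apply is_derive_Rconst|].
  apply (is_derive_Series qPoch_pow_step qPoch_pow_step_deriv (fun n => CQ * b ^ n) x0 (1 / 4));
    auto; try lra.
  - intros k x _. apply is_derive_qPoch_pow_step.
  - intros k x hx. apply Rabs_qPoch_pow_step_deriv_le. apply Rabs_def2 in hx. lra.
Qed.

Lemma qPochInf_pow_deriv_bounded :
  exists C, 0 <= C /\ forall x, 1 / 2 <= x -> Rabs (qPochInf_pow_deriv x) <= C.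
Proof.
  exists (CQ / (1 - b)). split.
  - pose proof beta_bounds. assert (0 <= lb) by apply Rabs_pos.
    unfold CQ. apply Rmult_le_pos; [|apply Rlt_le, Rinv_0_lt_compat; lra].
    apply Rplus_le_le_0_compat; [nra|]. apply Rmult_le_pos; [lra|].
    apply Rmult_le_pos; [nra| apply Rlt_le, Rinv_0_lt_compat; lra].
  - intros x hx. unfold qPochInf_pow_deriv. eapply Rle_trans.
    { apply Series_Rabs, (ex_series_R_le _ (fun n => CQ * b ^ n)); auto.
      intro n. rewrite Rabs_Rabsolu. apply Rabs_qPoch_pow_step_deriv_le; lra. }
    replace (CQ / (1 - b)) with (Series (fun n => CQ * b ^ n)).
    2:{ rewrite Series_scal_l, Series_geom; [field; lra| rewrite Rabs_pos_eq; lra]. }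
    apply Series_le; auto. intro n. split; [apply Rabs_pos| apply Rabs_qPoch_pow_step_deriv_le; lra].
Qed.
End qPochInfPowDerivative.

(** * Differentiability of I_mu in the order at mu = 0 *)

Lemma inv_qGamma_qPochInf_pow (b x : R) : 0 < b < 1 -> 0 < x ->
  / qGamma b x = qPochInf_pow b x / qPochInf_pow b 1 * Rpower (1 - b) (x - 1).
Proof.
  intros hb hx. unfold qGamma.
  destruct (qPochInf_pow_spec b 1 hb ltac:(lra)) as [_ H1].
  destruct (qPochInf_pow_spec b x hb hx) as [_ H2].
  unfold qPochInf_pow in *. rewrite Rpower_1 in * by lra.
  replace (x - 1) with (- (1 - x)) by ring. rewrite Rpower_Ropp.
  pose proof (Rpower_pos (1 - b) (1 - x)).
  field. repeat split; lra.
Qed.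

Lemma exp_INR_mult (k : nat) (x : R) : exp (INR k * x) = exp x ^ k.
Proof.
  induction k as [|k IH]; [simpl; rewrite Rmult_0_l; apply exp_0|].
  rewrite S_INR. replace ((INR k + 1) * x) with (INR k * x + x) by ring.
  rewrite exp_plus, IH. simpl. ring.
Qed.

(* After [1 / Gamma_b(x) = (b^x; b)_oo / (b; b)_oo * (1-b)^(x-1)], the [k]-th term of [I_mu(w)]
   is [scale k * exp (base k + mu * slope k) * (b^(mu+k+1); b)_oo * e^(i (mu + 2k) theta)], an
   explicitly smooth function of [mu]. *)
Section I3TermsInTheOrder.
Variables (q : R) (w : C).
Hypotheses (hq : 0 < q < 1) (hw : slit w).
Let b := q ^ 2.
Let r := Cmod (Cdiv w (RtoC 2)).
Let th := Carg (Cdiv w (RtoC 2)).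
Let Q1 := qPochInf_pow b 1.

Let hb : 0 < b < 1.
Proof. apply sqr_lt_1, hq. Qed.
Let hr : 0 < r.
Proof. apply (slit_Cmod_pos _ (slit_div_2 w hw)). Qed.
Let hQ1 : 0 < Q1.
Proof. apply (qPochInf_pow_spec b 1 hb ltac:(lra)). Qed.

Definition I3_scale (k : nat) := (1 - b) ^ k / (qPoch b b k * Q1).
Definition I3_slope (k : nat) := INR k * ln q + ln (1 - b) + ln r.
Definition I3_base (k : nat) := INR k * INR k * ln q + INR k * ln (1 - b) + 2 * INR k * ln r.
Definition I3_exp (k : nat) (mu : R) := exp (I3_base k + mu * I3_slope k).

Let I3_exp_eq (k : nat) (mu : R) :
  Rpower q (INR k * (mu + INR k)) * Rpower (1 - b) (mu + INR k) * Rpower r (mu + 2 * INR k)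
  = I3_exp k mu.
Proof. unfold Rpower, I3_exp, I3_base, I3_slope. rewrite <- !exp_plus. f_equal. ring. Qed.

Definition I3_term_Re (k : nat) (mu : R) :=
  I3_scale k * I3_exp k mu * qPochInf_pow b (mu + INR k + 1) * cos ((mu + 2 * INR k) * th).
Definition I3_term_Im (k : nat) (mu : R) :=
  I3_scale k * I3_exp k mu * qPochInf_pow b (mu + INR k + 1) * sin ((mu + 2 * INR k) * th).

Lemma I3_term_Re_Im (k : nat) (mu : R) : 0 < mu + INR k + 1 ->
  Re (I3_term q mu w k) = I3_term_Re k mu /\ Im (I3_term q mu w k) = I3_term_Im k mu.
Proof.
  intro hx.
  assert (Ec : I3_coef q mu k * Rpower r (mu + 2 * INR k)
               = I3_scale k * I3_exp k mu * qPochInf_pow b (mu + INR k + 1)).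
  { unfold I3_coef. fold b. unfold Rdiv at 1.
    rewrite Rinv_mult, (inv_qGamma_qPochInf_pow b) by auto.
    replace (mu + INR k + 1 - 1) with (mu + INR k) by ring.
    rewrite <- I3_exp_eq. unfold I3_scale. fold Q1.
    assert (0 < qPoch b b k) by (apply qPoch_bounds; lra).
    set (P := qPoch b b k). set (Q := qPochInf_pow b (mu + INR k + 1)).
    field. split; [lra| unfold P; lra]. }
  rewrite I3_term_coef. unfold Cpowr. fold r th. unfold I3_term_Re, I3_term_Im.
  split; unfold Re, Im, Cmult, RtoC; cbn [fst snd]; rewrite <- Ec; ring.
Qed.

Definition I3_term_Re_deriv (k : nat) (mu : R) :=
  I3_scale k * (I3_slope k * I3_exp k mu * qPochInf_pow b (mu + INR k + 1)
                  * cos ((mu + 2 * INR k) * th)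
     + I3_exp k mu * qPochInf_pow_deriv b (mu + INR k + 1) * cos ((mu + 2 * INR k) * th)
     - I3_exp k mu * qPochInf_pow b (mu + INR k + 1) * (th * sin ((mu + 2 * INR k) * th))).
Definition I3_term_Im_deriv (k : nat) (mu : R) :=
  I3_scale k * (I3_slope k * I3_exp k mu * qPochInf_pow b (mu + INR k + 1)
                  * sin ((mu + 2 * INR k) * th)
     + I3_exp k mu * qPochInf_pow_deriv b (mu + INR k + 1) * sin ((mu + 2 * INR k) * th)
     + I3_exp k mu * qPochInf_pow b (mu + INR k + 1) * (th * cos ((mu + 2 * INR k) * th))).

Let is_derive_I3_exp (k : nat) (mu : R) : is_derive (I3_exp k) mu (I3_slope k * I3_exp k mu).
Proof. unfold I3_exp. auto_derive; auto. ring. Qed.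

Let is_derive_qPochInf_pow_shift (k : nat) (mu : R) : Rabs mu < 1 / 2 ->
  is_derive (fun y => qPochInf_pow b (y + INR k + 1)) mu (qPochInf_pow_deriv b (mu + INR k + 1)).
Proof.
  intro h. apply Rabs_def2 in h. pose proof (pos_INR k).
  apply (is_derive_replace (fun y => qPochInf_pow b (y + (INR k + 1))) _ _
           (qPochInf_pow_deriv b (mu + (INR k + 1)))); [intro; f_equal; ring| f_equal; ring|].
  apply is_derive_shift, is_derive_qPochInf_pow; auto. lra.
Qed.

Let is_derive_I3_term_with (g : R -> R) (dg : R) (k : nat) (mu : R) :
  Rabs mu < 1 / 2 -> is_derive g mu dg ->
  is_derive (fun y => I3_scale k * I3_exp k y * qPochInf_pow b (y + INR k + 1) * g y) mu
    (I3_scale k * ((I3_slope k * I3_exp k mu * qPochInf_pow b (mu + INR k + 1)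
                    + I3_exp k mu * qPochInf_pow_deriv b (mu + INR k + 1)) * g mu
                   + I3_exp k mu * qPochInf_pow b (mu + INR k + 1) * dg)).
Proof.
  intros h hg.
  eapply (is_derive_replace
    (fun y => I3_scale k * ((I3_exp k y * qPochInf_pow b (y + INR k + 1)) * g y)));
    [intro; ring| reflexivity|].
  apply is_derive_scal.
  apply (is_derive_Rmult (fun y => I3_exp k y * qPochInf_pow b (y + INR k + 1)) g); auto.
  apply (is_derive_Rmult (I3_exp k) (fun y => qPochInf_pow b (y + INR k + 1))); auto.
Qed.

Lemma is_derive_I3_term_Re (k : nat) (mu : R) : Rabs mu < 1 / 2 ->
  is_derive (I3_term_Re k) mu (I3_term_Re_deriv k mu).
Proof.
  intro h.
  assert (Hc : is_derive (fun y => cos ((y + 2 * INR k) * th)) mu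
                 (- (th * sin ((mu + 2 * INR k) * th)))) by (auto_derive; auto; ring).
  refine (is_derive_replace _ _ _ _ _ (fun _ => eq_refl) _ (is_derive_I3_term_with _ _ k mu h Hc)).
  unfold I3_term_Re_deriv. ring.
Qed.

Lemma is_derive_I3_term_Im (k : nat) (mu : R) : Rabs mu < 1 / 2 ->
  is_derive (I3_term_Im k) mu (I3_term_Im_deriv k mu).
Proof.
  intro h.
  assert (Hs : is_derive (fun y => sin ((y + 2 * INR k) * th)) mu
                 (th * cos ((mu + 2 * INR k) * th))) by (auto_derive; auto; ring).
  refine (is_derive_replace _ _ _ _ _ (fun _ => eq_refl) _ (is_derive_I3_term_with _ _ k mu h Hs)).
  unfold I3_term_Im_deriv. ring.
Qed.

Let I3_scale_bounds (k : nat) : 0 < I3_scale k <= / Q1.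
Proof.
  pose proof (pow_div_qPoch_bounds b k hb). pose proof (Rinv_0_lt_compat _ hQ1).
  replace (I3_scale k) with ((1 - b) ^ k / qPoch b b k * / Q1)
    by (unfold I3_scale, Rdiv; rewrite Rinv_mult; ring).
  split; [nra|]. rewrite <- (Rmult_1_l (/ Q1)) at 2. apply Rmult_le_compat_r; lra.
Qed.

Let lam := Rabs (ln q).
Let bet := Rabs (ln (1 - b)) + Rabs (ln r).

Let Rabs_I3_slope_le (k : nat) : Rabs (I3_slope k) <= INR k * lam + bet.
Proof.
  unfold I3_slope, lam, bet. pose proof (pos_INR k).
  eapply Rle_trans; [apply Rabs_triang|].
  eapply Rle_trans; [apply Rplus_le_compat_r, Rabs_triang|].
  rewrite Rabs_mult, Rabs_pos_eq by lra. lra.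
Qed.

Let I3_exp_bounds (k : nat) (mu : R) : Rabs mu < 1 / 2 ->
  0 < I3_exp k mu <= exp (bet / 2) * (q ^ (k * k) * (r ^ 2 * exp (lam / 2)) ^ k).
Proof.
  intro hmu. split; [apply exp_pos|].
  unfold I3_exp. rewrite exp_plus.
  assert (E0 : exp (I3_base k) = q ^ (k * k) * (1 - b) ^ k * (r ^ 2) ^ k).
  { pose proof (I3_exp_eq k 0) as H. unfold I3_exp in H. rewrite Rmult_0_l, Rplus_0_r in H.
    rewrite <- H, !Rplus_0_l, <- mult_INR, !Rpower_pow by lra.
    replace (2 * INR k) with (INR (2 * k)) by (rewrite mult_INR; simpl; ring).
    rewrite Rpower_pow, (pow_mult r 2 k) by lra. reflexivity. }
  rewrite E0.
  assert (h1 : exp (mu * I3_slope k) <= exp (bet / 2) * exp (lam / 2) ^ k).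
  { rewrite <- exp_INR_mult, <- exp_plus. apply exp_le_mono.
    pose proof (Rabs_I3_slope_le k).
    assert (mu * I3_slope k <= Rabs mu * Rabs (I3_slope k)) by (rewrite <- Rabs_mult; apply Rle_abs).
    assert (Rabs mu * Rabs (I3_slope k) <= 1 / 2 * Rabs (I3_slope k))
      by (apply Rmult_le_compat_r; [apply Rabs_pos| lra]).
    lra. }
  assert (0 < q ^ (k * k)) by (apply pow_lt; lra).
  assert (0 < (r ^ 2) ^ k) by (apply pow_lt; nra).
  pose proof (pow_bounds (1 - b) k ltac:(lra)).
  rewrite Rpow_mult_distr.
  assert (q ^ (k * k) * (1 - b) ^ k * (r ^ 2) ^ k <= q ^ (k * k) * (r ^ 2) ^ k).
  { replace (q ^ (k * k) * (1 - b) ^ k * (r ^ 2) ^ k)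
      with ((q ^ (k * k) * (r ^ 2) ^ k) * (1 - b) ^ k) by ring.
    rewrite <- (Rmult_1_r (q ^ (k * k) * (r ^ 2) ^ k)) at 2.
    apply Rmult_le_compat_l; [apply Rlt_le, Rmult_lt_0_compat|]; lra. }
  assert (0 < q ^ (k * k) * (1 - b) ^ k * (r ^ 2) ^ k)
    by (apply Rmult_lt_0_compat; [apply Rmult_lt_0_compat|]; lra).
  pose proof (exp_pos (mu * I3_slope k)).
  apply Rle_trans with (q ^ (k * k) * (r ^ 2) ^ k * (exp (bet / 2) * exp (lam / 2) ^ k));
    [apply Rmult_le_compat; lra| right; ring].
Qed.

Let I3_scale_exp_bounds (k : nat) (mu : R) : Rabs mu < 1 / 2 ->
  0 < I3_scale k * I3_exp k mu
  <= exp (bet / 2) * (q ^ (k * k) * (r ^ 2 * exp (lam / 2)) ^ k) * / Q1.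
Proof.
  intro hmu. pose proof (I3_scale_bounds k). pose proof (I3_exp_bounds k mu hmu).
  split; [apply Rmult_lt_0_compat; lra|]. rewrite Rmult_comm. apply Rmult_le_compat; lra.
Qed.

Let deriv_factor_le (C : R) (k : nat) (mu u v : R) :
  0 < qPochInf_pow b (mu + INR k + 1) <= 1 ->
  Rabs (qPochInf_pow_deriv b (mu + INR k + 1)) <= C -> Rabs u <= 1 -> Rabs v <= 1 ->
  Rabs (I3_slope k * qPochInf_pow b (mu + INR k + 1) * u)
  + Rabs (qPochInf_pow_deriv b (mu + INR k + 1) * u)
  + Rabs (qPochInf_pow b (mu + INR k + 1) * (th * v))
  <= INR k * lam + bet + C + Rabs th.
Proof.
  set (Q := qPochInf_pow b (mu + INR k + 1)). set (dQ := qPochInf_pow_deriv b (mu + INR k + 1)).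
  intros HQ HdQ hu hv. pose proof (Rabs_I3_slope_le k).
  rewrite !Rabs_mult, (Rabs_pos_eq Q) by lra.
  pose proof (Rabs_pos u). pose proof (Rabs_pos v). pose proof (Rabs_pos (I3_slope k)).
  pose proof (Rabs_pos dQ). pose proof (Rabs_pos th).
  assert (Rabs (I3_slope k) * Q * Rabs u <= Rabs (I3_slope k)).
  { rewrite Rmult_assoc. rewrite <- (Rmult_1_r (Rabs (I3_slope k))) at 2.
    apply Rmult_le_compat_l; nra. }
  assert (Rabs dQ * Rabs u <= C) by nra.
  assert (Q * (Rabs th * Rabs v) <= Rabs th).
  { assert (Rabs th * Rabs v <= Rabs th) by nra. nra. }
  lra.
Qed.

Lemma I3_term_deriv_dominated : exists M : nat -> R, ex_series M /\
  forall k mu, Rabs mu < 1 / 2 ->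
    Rabs (I3_term_Re_deriv k mu) <= M k /\ Rabs (I3_term_Im_deriv k mu) <= M k.
Proof.
  destruct (qPochInf_pow_deriv_bounded b hb) as [C [hC0 hC]].
  assert (hlam : 0 <= lam) by apply Rabs_pos.
  assert (hbet : 0 <= bet) by (unfold bet; pose proof (Rabs_pos (ln (1 - b))); pose proof (Rabs_pos (ln r)); lra).
  set (K1 := exp (bet / 2) * / Q1 * (lam + bet + C + Rabs th)).
  exists (fun k => K1 * ((INR k + 1) * q ^ (k * k) * (r ^ 2 * exp (lam / 2)) ^ k)).
  split.
  { apply ex_series_R_scal, ex_series_succ_gaussian; auto.
    pose proof (exp_pos (lam / 2)). apply Rmult_lt_0_compat; nra. }
  intros k mu hmu.
  pose proof (I3_scale_exp_bounds k mu hmu) as HX.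
  apply Rabs_def2 in hmu. pose proof (pos_INR k).
  assert (HQ : 0 < qPochInf_pow b (mu + INR k + 1) <= 1) by (apply qPochInf_pow_spec; lra).
  assert (HdQ : Rabs (qPochInf_pow_deriv b (mu + INR k + 1)) <= C) by (apply hC; lra).
  set (c := cos ((mu + 2 * INR k) * th)). set (s := sin ((mu + 2 * INR k) * th)).
  assert (Hc : Rabs c <= 1) by (apply Rabs_le; split; apply COS_bound).
  assert (Hs : Rabs s <= 1) by (apply Rabs_le; split; apply SIN_bound).
  set (X := I3_scale k * I3_exp k mu) in *.
  assert (Hfin : forall T, Rabs T <= INR k * lam + bet + C + Rabs th ->
    Rabs (X * T) <= K1 * ((INR k + 1) * q ^ (k * k) * (r ^ 2 * exp (lam / 2)) ^ k)).
  { intros T hT. rewrite Rabs_mult, Rabs_pos_eq by lra.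
    assert (INR k * lam + bet + C + Rabs th <= (INR k + 1) * (lam + bet + C + Rabs th))
      by (pose proof (Rabs_pos th); nra).
    apply Rle_trans with (exp (bet / 2) * (q ^ (k * k) * (r ^ 2 * exp (lam / 2)) ^ k) * / Q1 *
                          ((INR k + 1) * (lam + bet + C + Rabs th)));
      [apply Rmult_le_compat; try lra; apply Rabs_pos| right; unfold K1; ring]. }
  set (Q := qPochInf_pow b (mu + INR k + 1)) in *.
  set (dQ := qPochInf_pow_deriv b (mu + INR k + 1)) in *.
  split.
  - replace (I3_term_Re_deriv k mu) with (X * (I3_slope k * Q * c + dQ * c - Q * (th * s)))
      by (unfold I3_term_Re_deriv, X, Q, dQ, c, s; ring).
    apply Hfin. eapply Rle_trans; [|apply (deriv_factor_le C k mu c s HQ HdQ Hc Hs)].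
    unfold Rminus. eapply Rle_trans; [apply Rabs_triang|]. rewrite Rabs_Ropp.
    apply Rplus_le_compat_r, Rabs_triang.
  - replace (I3_term_Im_deriv k mu) with (X * (I3_slope k * Q * s + dQ * s + Q * (th * c)))
      by (unfold I3_term_Im_deriv, X, Q, dQ, c, s; ring).
    apply Hfin. eapply Rle_trans; [|apply (deriv_factor_le C k mu s c HQ HdQ Hs Hc)].
    eapply Rle_trans; [apply Rabs_triang|]. apply Rplus_le_compat_r, Rabs_triang.
Qed.
End I3TermsInTheOrder.

(** * Integer order *)

(* [Lim f x] is [Lim_seq (fun k => f (x + step k))] (Coquelicot's [Rbar_loc_seq]), so [K3] at
   an integer is the limit of [K3_nonint] along [m + step k]. *)
Definition step (k : nat) : R := / (INR k + 1).

Lemma step_pos (k : nat) : 0 < step k.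
Proof. unfold step. apply Rinv_0_lt_compat. pose proof (pos_INR k). lra. Qed.

Lemma step_lt_1 (k : nat) : (1 <= k)%nat -> step k < 1.
Proof.
  intro hk. unfold step. apply le_INR in hk. simpl in hk. rewrite <- Rinv_1.
  apply Rinv_lt_contravar; lra.
Qed.

Lemma is_lim_seq_step : is_lim_seq step 0.
Proof.
  apply (is_lim_seq_ext (Rbar_loc_seq 0)); [intro; simpl; unfold step; ring|].
  apply is_lim_seq_Rbar_loc_seq.
Qed.

Lemma is_lim_seq_opp_step : is_lim_seq (fun k => - step k) 0.
Proof.
  replace (Finite 0) with (Rbar_opp 0) by (simpl; f_equal; ring).
  apply (is_lim_seq_opp step 0), is_lim_seq_step.
Qed.

Lemma is_lim_seq_diff_quot (f : R -> R) (x0 d : R) (s : nat -> R) :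
  is_derive f x0 d -> is_lim_seq s 0 -> (forall k, s k <> 0) ->
  is_lim_seq (fun k => (f (x0 + s k) - f x0) / s k) d.
Proof.
  intros hd hs hnz. apply is_derive_Reals in hd.
  apply is_lim_seq_spec. intros eps.
  destruct (hd eps (cond_pos eps)) as [del hdel].
  apply is_lim_seq_spec in hs. destruct (hs del) as [N HN].
  exists N. intros n hn. apply hdel; auto. specialize (HN n hn). rewrite Rminus_0_r in HN. auto.
Qed.

Lemma is_lim_seq_comp_derivable (f : R -> R) (x0 d : R) (s : nat -> R) :
  is_derive f x0 d -> is_lim_seq s 0 -> (forall k, s k <> 0) ->
  is_lim_seq (fun k => f (x0 + s k)) (f x0).
Proof.
  intros hd hs hnz.
  assert (H : is_lim_seq (fun k => f x0 + s k * ((f (x0 + s k) - f x0) / s k)) (f x0 + 0 * d)).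
  { apply is_lim_seq_plus'; [apply is_lim_seq_const|].
    apply is_lim_seq_mult'; auto. apply is_lim_seq_diff_quot; auto. }
  rewrite Rmult_0_l, Rplus_0_r in H. eapply is_lim_seq_ext; [|exact H].
  intro k. simpl. field. auto.
Qed.

Lemma step_neq_0 (k : nat) : step k <> 0.
Proof. pose proof (step_pos k). lra. Qed.

Lemma opp_step_neq_0 (k : nat) : - step k <> 0.
Proof. pose proof (step_pos k). lra. Qed.

Lemma is_lim_seq_sym_diff_quot (f : R -> R) (d : R) : is_derive f 0 d ->
  is_lim_seq (fun k => (f (- step k) - f (step k)) / step k) (- 2 * d).
Proof.
  intro hd.
  apply (is_lim_seq_ext
    (fun k => - ((f (0 + - step k) - f 0) / (- step k)) - (f (0 + step k) - f 0) / step k)).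
  { intro k. rewrite !Rplus_0_l. field. apply step_neq_0. }
  replace (- 2 * d) with (- d - d) by ring.
  apply is_lim_seq_minus'.
  - apply (is_lim_seq_opp _ d).
    exact (is_lim_seq_diff_quot f 0 d _ hd is_lim_seq_opp_step opp_step_neq_0).
  - exact (is_lim_seq_diff_quot f 0 d _ hd is_lim_seq_step step_neq_0).
Qed.

Definition is_lim_Cseq (u : nat -> C) (L : C) :=
  is_lim_seq (fun k => Re (u k)) (Re L) /\ is_lim_seq (fun k => Im (u k)) (Im L).

Lemma is_lim_Cseq_ext (u v : nat -> C) (L : C) :
  (forall k, (1 <= k)%nat -> u k = v k) -> is_lim_Cseq u L -> is_lim_Cseq v L.
Proof.
  intros E [h1 h2].
  assert (E' : forall k, u (S k) = v (S k)) by (intro k; apply E; lia).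
  split; apply is_lim_seq_incr_1;
    [apply is_lim_seq_incr_1 in h1| apply is_lim_seq_incr_1 in h2];
    (eapply is_lim_seq_ext; [|eassumption]); intro k; simpl; rewrite E'; auto.
Qed.

Lemma is_lim_Cseq_unique (u : nat -> C) (L1 L2 : C) :
  is_lim_Cseq u L1 -> is_lim_Cseq u L2 -> L1 = L2.
Proof.
  intros [h1 h2] [h3 h4].
  apply is_lim_seq_unique in h1, h2, h3, h4.
  apply injective_projections.
  - change (Re L1 = Re L2). rewrite h3 in h1. injection h1. auto.
  - change (Im L1 = Im L2). rewrite h4 in h2. injection h2. auto.
Qed.

Lemma is_lim_Cseq_plus (u v : nat -> C) (L1 L2 : C) : is_lim_Cseq u L1 -> is_lim_Cseq v L2 ->
  is_lim_Cseq (fun k => Cplus (u k) (v k)) (Cplus L1 L2).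
Proof.
  intros [h1 h2] [h3 h4]. split; simpl.
  - apply (is_lim_seq_plus' (fun k => Re (u k)) (fun k => Re (v k))); auto.
  - apply (is_lim_seq_plus' (fun k => Im (u k)) (fun k => Im (v k))); auto.
Qed.

Lemma is_lim_Cseq_minus (u v : nat -> C) (L1 L2 : C) : is_lim_Cseq u L1 -> is_lim_Cseq v L2 ->
  is_lim_Cseq (fun k => Cminus (u k) (v k)) (Cminus L1 L2).
Proof.
  intros [h1 h2] [h3 h4]. split; simpl.
  - apply (is_lim_seq_minus' (fun k => Re (u k)) (fun k => Re (v k))); auto.
  - apply (is_lim_seq_minus' (fun k => Im (u k)) (fun k => Im (v k))); auto.
Qed.

Lemma is_lim_Cseq_mult (u v : nat -> C) (L1 L2 : C) : is_lim_Cseq u L1 -> is_lim_Cseq v L2 ->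
  is_lim_Cseq (fun k => Cmult (u k) (v k)) (Cmult L1 L2).
Proof.
  intros [h1 h2] [h3 h4]. split; simpl.
  - apply (is_lim_seq_minus' (fun k => fst (u k) * fst (v k)) (fun k => snd (u k) * snd (v k)));
      apply is_lim_seq_mult'; auto.
  - apply (is_lim_seq_plus' (fun k => fst (u k) * snd (v k)) (fun k => snd (u k) * fst (v k)));
      apply is_lim_seq_mult'; auto.
Qed.

Lemma is_lim_Cseq_const (c : C) : is_lim_Cseq (fun _ => c) c.
Proof. split; apply is_lim_seq_const. Qed.

Lemma is_lim_Cseq_RtoC_step (f : R -> R) (m : R) :
  ex_derive f m -> is_lim_Cseq (fun k => RtoC (f (m + step k))) (RtoC (f m)).
Proof.
  intros [d hd]. split; simpl; [|apply is_lim_seq_const].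
  exact (is_lim_seq_comp_derivable f m d step hd is_lim_seq_step step_neq_0).
Qed.

Lemma K3_integer_limit (q m : R) (w L : C) : is_integer m ->
  is_lim_Cseq (fun k => K3_nonint q (m + step k) w) L -> K3 q m w = L.
Proof.
  intros hm [h1 h2]. unfold K3.
  destruct (excluded_middle_informative (is_integer m)) as [_|hn]; [|contradiction].
  unfold Lim. simpl Rbar_loc_seq.
  change (fun n : nat => Re (K3_nonint q (m + / (INR n + 1)) w))
    with (fun n => Re (K3_nonint q (m + step n) w)).
  change (fun n : nat => Im (K3_nonint q (m + / (INR n + 1)) w))
    with (fun n => Im (K3_nonint q (m + step n) w)).
  rewrite (is_lim_seq_unique _ _ h1), (is_lim_seq_unique _ _ h2). simpl.
  destruct L; reflexivity.
Qed.

Lemma K3_not_integer (q m : R) (w : C) : ~ is_integer m -> K3 q m w = K3_nonint q m w.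
Proof.
  intro h. unfold K3. destruct (excluded_middle_informative (is_integer m)); tauto.
Qed.

Lemma not_integer_add_step (m : R) (k : nat) : is_integer m -> (1 <= k)%nat ->
  ~ is_integer (m + step k).
Proof.
  intros [j ->] hk [n E].
  pose proof (step_pos k) as h0. pose proof (step_lt_1 k hk) as h1.
  assert (E2 : step k = IZR (n - j)) by (rewrite minus_IZR; lra).
  rewrite E2 in h0, h1. apply lt_IZR in h0. apply lt_IZR in h1. lia.
Qed.

Lemma is_derive_I3_at_0 (q : R) (w : C) : 0 < q < 1 -> slit w ->
  exists dR dI, is_derive (fun mu => Re (I3 q mu w)) 0 dR /\
                is_derive (fun mu => Im (I3 q mu w)) 0 dI.
Proof.
  intros hq hw.
  destruct (I3_term_deriv_dominated q w hq hw) as [M [hM hbd]].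
  destruct (ex_CSeries_I3_term q 0 w hq hw) as [hre him].
  assert (hloc : forall mu, Rabs mu < 1 / 2 ->
            Re (I3 q mu w) = Series (fun k => I3_term_Re q w k mu) /\
            Im (I3 q mu w) = Series (fun k => I3_term_Im q w k mu)).
  { intros mu hmu. apply Rabs_def2 in hmu.
    split; rewrite I3_CSeries; unfold CSeries; simpl; apply Series_ext;
      intro k; pose proof (pos_INR k); apply I3_term_Re_Im; auto; lra. }
  assert (hlocb : locally 0 (fun mu => Rabs mu < 1 / 2)).
  { exists (mkposreal (1 / 2) ltac:(lra)). intros y hy. simpl in hy.
    unfold ball in hy. simpl in hy. unfold AbsRing_ball, abs, minus, plus, opp in hy. simpl in hy.
    rewrite Ropp_0, Rplus_0_r in hy. auto. }
  exists (Series (fun k => I3_term_Re_deriv q w k 0)), (Series (fun k => I3_term_Im_deriv q w k 0)).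
  split.
  - apply (is_derive_ext_loc (fun mu => Series (fun k => I3_term_Re q w k mu))).
    { eapply filter_imp; [|exact hlocb]. intros mu hmu. symmetry. apply hloc; auto. }
    apply (is_derive_Series _ _ M 0 (1 / 2)); auto; try lra.
    + intros k x hx. rewrite Rminus_0_r in hx. apply is_derive_I3_term_Re; auto.
    + intros k x hx. rewrite Rminus_0_r in hx. apply hbd; auto.
    + eapply ex_series_R_ext; [|exact hre]. intro k. simpl.
      apply I3_term_Re_Im; auto. pose proof (pos_INR k); lra.
  - apply (is_derive_ext_loc (fun mu => Series (fun k => I3_term_Im q w k mu))).
    { eapply filter_imp; [|exact hlocb]. intros mu hmu. symmetry. apply hloc; auto. }
    apply (is_derive_Series _ _ M 0 (1 / 2)); auto; try lra.
    + intros k x hx. rewrite Rminus_0_r in hx. apply is_derive_I3_term_Im; auto.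
    + intros k x hx. rewrite Rminus_0_r in hx. apply hbd; auto.
    + eapply ex_series_R_ext; [|exact him]. intro k. simpl.
      apply I3_term_Re_Im; auto. pose proof (pos_INR k); lra.
Qed.

Lemma ex_derive_qGamma_1 (b : R) : 0 < b < 1 -> ex_derive (qGamma b) 1.
Proof.
  intro hb. pose proof (is_derive_qPochInf_pow b hb 1 ltac:(lra)) as hQ.
  destruct (qPochInf_pow_spec b 1 hb ltac:(lra)) as [_ hQ1].
  set (Q1 := qPochInf b b).
  assert (E : forall x, qGamma b x = Q1 * (/ qPochInf_pow b x) * Rpower (1 - b) (1 - x)).
  { intro x. unfold qGamma, qPochInf_pow, Q1. unfold Rdiv. ring. }
  eexists. eapply is_derive_replace; [intro x; symmetry; apply E| reflexivity|].
  apply (is_derive_Rmult (fun x => Q1 * / qPochInf_pow b x) (fun x => Rpower (1 - b) (1 - x))).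
  - apply is_derive_scal, is_derive_inv; [exact hQ| lra].
  - unfold Rpower. auto_derive; auto.
Qed.

(* [Gamma_b(eps) = Gamma_b(1 + eps) (1 - b) / (1 - b^eps)] removes the pole at [eps = 0]. *)
Lemma mult_K3_factor (q eps : R) : 0 < q < 1 -> 0 < eps ->
  eps * K3_factor q eps
  = / 2 * Rpower q (- eps ^ 2 + eps) * qGamma (q ^ 2) (1 + eps) * qGamma (q ^ 2) (1 - eps)
    * ((1 - q ^ 2) / ((1 - Rpower (q ^ 2) eps) / eps)).
Proof.
  intros hq heps. pose proof (sqr_lt_1 q hq) as hb.
  assert (hne : Rpower (q ^ 2) eps <> 1) by (apply Rpower_neq_1; lra).
  unfold K3_factor. replace (1 + eps) with (eps + 1) by ring.
  rewrite qGamma_succ by lra. field. repeat split; lra.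
Qed.

(* Every factor of [mult_K3_factor] converges; the last one since [(1 - b^eps) / eps -> - ln b]. *)
Lemma is_lim_seq_step_K3_factor (q : R) : 0 < q < 1 ->
  exists c : R, is_lim_seq (fun k => step k * K3_factor q (step k)) c.
Proof.
  intro hq. set (b := q ^ 2). pose proof (sqr_lt_1 q hq) as hb. fold b in hb.
  assert (hlnb : ln b < 0) by (apply ln_lt_0, hb).
  destruct (ex_derive_qGamma_1 b hb) as [dG hG].
  eexists.
  apply (is_lim_seq_ext (fun k => / 2 * Rpower q (- step k ^ 2 + step k) * qGamma b (1 + step k)
           * qGamma b (1 - step k) * ((1 - b) * / ((1 - Rpower b (step k)) / step k)))).
  { intro k. symmetry. apply mult_K3_factor; [exact hq| apply step_pos]. }
  apply is_lim_seq_mult';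
    [apply is_lim_seq_mult'; [apply is_lim_seq_mult'; [apply is_lim_seq_mult'|]|]|].
  - apply is_lim_seq_const.
  - apply (is_lim_seq_ext (fun k => Rpower q (- (0 + step k) ^ 2 + (0 + step k))));
      [intro k; rewrite Rplus_0_l; reflexivity|].
    apply (is_lim_seq_comp_derivable (fun x => Rpower q (- x ^ 2 + x)) 0 (ln q));
      [|apply is_lim_seq_step| apply step_neq_0].
    unfold Rpower. auto_derive; auto.
    replace ((- (0 * (0 * 1)) + 0) * ln q) with 0 by ring. rewrite exp_0. ring.
  - exact (is_lim_seq_comp_derivable (qGamma b) 1 dG step hG is_lim_seq_step step_neq_0).
  - exact (is_lim_seq_comp_derivable (qGamma b) 1 dG (fun k => - step k) hG
             is_lim_seq_opp_step opp_step_neq_0).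
  - apply is_lim_seq_mult'; [apply is_lim_seq_const|].
    apply (is_lim_seq_inv _ (- (ln b * Rpower b 0))); [|rewrite Rpower_O by lra; intro E; injection E; lra].
    pose proof (is_lim_seq_diff_quot (fun x => Rpower b x) 0 (ln b * Rpower b 0) step
                  (is_derive_Rpower b 0) is_lim_seq_step step_neq_0) as H.
    apply (is_lim_seq_opp _ (ln b * Rpower b 0)) in H.
    eapply is_lim_seq_ext; [|exact H]. intro k. simpl.
    rewrite Rpower_O, Rplus_0_l by lra. field. apply step_neq_0.
Qed.

Lemma Re_Im_K3_nonint (q eps : R) (w : C) :
  Re (K3_nonint q eps w) = K3_factor q eps * (Re (I3 q (- eps) w) - Re (I3 q eps w)) /\
  Im (K3_nonint q eps w) = K3_factor q eps * (Im (I3 q (- eps) w) - Im (I3 q eps w)).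
Proof.
  rewrite K3_nonint_factor. destruct (I3 q (- eps) w), (I3 q eps w).
  unfold Re, Im, RtoC, Cmult, Cminus, Cplus, Copp. simpl. split; ring.
Qed.

Lemma K3_nonint_converges_at_0 (q : R) (w : C) : 0 < q < 1 -> slit w ->
  exists L, is_lim_Cseq (fun k => K3_nonint q (0 + step k) w) L.
Proof.
  intros hq hw.
  destruct (is_derive_I3_at_0 q w hq hw) as [dR [dI [hR hI]]].
  destruct (is_lim_seq_step_K3_factor q hq) as [c hc].
  exists (c * (- 2 * dR), c * (- 2 * dI)).
  split.
  - apply (is_lim_seq_ext (fun k => step k * K3_factor q (step k)
             * ((Re (I3 q (- step k) w) - Re (I3 q (step k) w)) / step k))).
    { intro k. rewrite Rplus_0_l, (proj1 (Re_Im_K3_nonint q _ w)). field. apply step_neq_0. }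
    apply is_lim_seq_mult'; [exact hc| exact (is_lim_seq_sym_diff_quot _ _ hR)].
  - apply (is_lim_seq_ext (fun k => step k * K3_factor q (step k)
             * ((Im (I3 q (- step k) w) - Im (I3 q (step k) w)) / step k))).
    { intro k. rewrite Rplus_0_l, (proj2 (Re_Im_K3_nonint q _ w)). field. apply step_neq_0. }
    apply is_lim_seq_mult'; [exact hc| exact (is_lim_seq_sym_diff_quot _ _ hI)].
Qed.

Lemma is_lim_Cseq_scal_l (c : C) (u : nat -> C) (L : C) :
  is_lim_Cseq u L -> is_lim_Cseq (fun k => Cmult c (u k)) (Cmult c L).
Proof. apply is_lim_Cseq_mult, is_lim_Cseq_const. Qed.

Lemma is_lim_Cseq_coef (f : R -> R) (m : R) (u : nat -> C) (L : C) :
  ex_derive f m -> is_lim_Cseq u L ->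
  is_lim_Cseq (fun k => Cmult (RtoC (f (m + step k))) (u k)) (Cmult (RtoC (f m)) L).
Proof. intros hf hu. apply is_lim_Cseq_mult; [apply is_lim_Cseq_RtoC_step|]; auto. Qed.

Section IntegerOrder.
Variable q : R.
Hypothesis hq : 0 < q < 1.
Let D := RtoC (1 - q ^ 2).
Let up (w : C) := Cmult (RtoC (Rpower q (1 / 2))) w.
Let down (w : C) := Cmult (RtoC (Rpower q (- 1 / 2))) w.

Let slit_up (w : C) : slit w -> slit (up w).
Proof. intro h. apply slit_scal; [apply Rpower_pos| exact h]. Qed.
Let slit_down (w : C) : slit w -> slit (down w).
Proof. intro h. apply slit_scal; [apply Rpower_pos| exact h]. Qed.

(* Adding and subtracting the two relations isolates [K_(mu+1)] and [K_(mu-1)]. *)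
Lemma K3_nonint_succ_eq (mu : R) (z : C) : ~ is_integer mu -> slit z ->
  K3_nonint q (mu + 1) z =
  Cmult (RtoC (/ (2 * Rpower q (mu / 2))))
   (Cminus
     (Cplus (Cmult (RtoC (- 4)) (Cmult (Cinv (Cmult D z)) (K3_nonint q mu (down z))))
            (Cmult (RtoC (2 * (Rpower q (- mu) + Rpower q mu)))
                   (Cmult (Cinv (Cmult D z)) (K3_nonint q mu (up z)))))
     (Cmult (RtoC (- 2 * (Rpower q (- mu) - Rpower q mu)))
            (Cmult (Cinv (Cmult D z)) (K3_nonint q mu (up z))))).
Proof.
  intros hmu hz. unfold D, up, down.
  rewrite <- (K3_nonint_relation_minus q mu z hq hmu hz),
    <- (K3_nonint_relation_plus q mu z hq hmu hz).
  pose proof (Rpower_pos q (mu / 2)).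
  rewrite RtoC_inv, RtoC_mult by lra.
  field; repeat split; try (apply RtoC_neq_0; lra); intro E; injection E; lra.
Qed.

Lemma K3_nonint_pred_eq (mu : R) (z : C) : ~ is_integer mu -> slit z ->
  K3_nonint q (mu - 1) z =
  Cmult (RtoC (/ (2 * Rpower q (- mu / 2))))
   (Cplus
     (Cplus (Cmult (RtoC (- 4)) (Cmult (Cinv (Cmult D z)) (K3_nonint q mu (down z))))
            (Cmult (RtoC (2 * (Rpower q (- mu) + Rpower q mu)))
                   (Cmult (Cinv (Cmult D z)) (K3_nonint q mu (up z)))))
     (Cmult (RtoC (- 2 * (Rpower q (- mu) - Rpower q mu)))
            (Cmult (Cinv (Cmult D z)) (K3_nonint q mu (up z))))).
Proof.
  intros hmu hz. unfold D, up, down.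
  rewrite <- (K3_nonint_relation_minus q mu z hq hmu hz),
    <- (K3_nonint_relation_plus q mu z hq hmu hz).
  pose proof (Rpower_pos q (- mu / 2)).
  rewrite RtoC_inv, RtoC_mult by lra.
  field; repeat split; try (apply RtoC_neq_0; lra); intro E; injection E; lra.
Qed.

Definition K3_converges_at (m : R) :=
  forall w, slit w -> exists L, is_lim_Cseq (fun k => K3_nonint q (m + step k) w) L.

Let ex_derive_sum_coef (m : R) : ex_derive (fun mu => 2 * (Rpower q (- mu) + Rpower q mu)) m.
Proof. unfold Rpower. auto_derive. auto. Qed.

Let ex_derive_diff_coef (m : R) : ex_derive (fun mu => - 2 * (Rpower q (- mu) - Rpower q mu)) m.
Proof. unfold Rpower. auto_derive. auto. Qed.

Let ex_derive_inv_coef (m : R) : ex_derive (fun mu => / (2 * Rpower q (mu / 2))) m.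
Proof. unfold Rpower. auto_derive. pose proof (exp_pos (m / 2 * ln q)). lra. Qed.

Let ex_derive_inv_opp_coef (m : R) : ex_derive (fun mu => / (2 * Rpower q (- mu / 2))) m.
Proof. unfold Rpower. auto_derive. pose proof (exp_pos (- m / 2 * ln q)). lra. Qed.

Let is_lim_Cseq_combination (m : R) (w : C) (L1 L2 : C) :
  is_lim_Cseq (fun k => K3_nonint q (m + step k) (up w)) L1 ->
  is_lim_Cseq (fun k => K3_nonint q (m + step k) (down w)) L2 ->
  (is_lim_Cseq (fun k => Cmult (RtoC (- 4))
       (Cmult (Cinv (Cmult D w)) (K3_nonint q (m + step k) (down w))))
     (Cmult (RtoC (- 4)) (Cmult (Cinv (Cmult D w)) L2)) /\
   is_lim_Cseq (fun k => Cmult (RtoC (2 * (Rpower q (- (m + step k)) + Rpower q (m + step k))))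
       (Cmult (Cinv (Cmult D w)) (K3_nonint q (m + step k) (up w))))
     (Cmult (RtoC (2 * (Rpower q (- m) + Rpower q m))) (Cmult (Cinv (Cmult D w)) L1)) /\
   is_lim_Cseq (fun k => Cmult (RtoC (- 2 * (Rpower q (- (m + step k)) - Rpower q (m + step k))))
       (Cmult (Cinv (Cmult D w)) (K3_nonint q (m + step k) (up w))))
     (Cmult (RtoC (- 2 * (Rpower q (- m) - Rpower q m))) (Cmult (Cinv (Cmult D w)) L1))).
Proof.
  intros H1 H2. split; [|split].
  - apply is_lim_Cseq_scal_l, is_lim_Cseq_scal_l, H2.
  - apply (is_lim_Cseq_coef (fun mu => 2 * (Rpower q (- mu) + Rpower q mu)));
      [apply ex_derive_sum_coef| apply is_lim_Cseq_scal_l, H1].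
  - apply (is_lim_Cseq_coef (fun mu => - 2 * (Rpower q (- mu) - Rpower q mu)));
      [apply ex_derive_diff_coef| apply is_lim_Cseq_scal_l, H1].
Qed.

Lemma K3_converges_at_succ (m : R) : is_integer m -> K3_converges_at m -> K3_converges_at (m + 1).
Proof.
  intros hi Hm w hw.
  destruct (Hm _ (slit_up w hw)) as [L1 H1]. destruct (Hm _ (slit_down w hw)) as [L2 H2].
  destruct (is_lim_Cseq_combination m w L1 L2 H1 H2) as [Ha [Hb Hc]].
  eexists. eapply is_lim_Cseq_ext.
  { intros k hk. replace (m + 1 + step k) with ((m + step k) + 1) by ring.
    symmetry. apply K3_nonint_succ_eq; auto. apply not_integer_add_step; auto. }
  apply (is_lim_Cseq_coef (fun mu => / (2 * Rpower q (mu / 2)))); [apply ex_derive_inv_coef|].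
  apply is_lim_Cseq_minus; [apply is_lim_Cseq_plus|]; eassumption.
Qed.

Lemma K3_converges_at_pred (m : R) : is_integer m -> K3_converges_at m -> K3_converges_at (m - 1).
Proof.
  intros hi Hm w hw.
  destruct (Hm _ (slit_up w hw)) as [L1 H1]. destruct (Hm _ (slit_down w hw)) as [L2 H2].
  destruct (is_lim_Cseq_combination m w L1 L2 H1 H2) as [Ha [Hb Hc]].
  eexists. eapply is_lim_Cseq_ext.
  { intros k hk. replace (m - 1 + step k) with ((m + step k) - 1) by ring.
    symmetry. apply K3_nonint_pred_eq; auto. apply not_integer_add_step; auto. }
  apply (is_lim_Cseq_coef (fun mu => / (2 * Rpower q (- mu / 2)))); [apply ex_derive_inv_opp_coef|].
  apply is_lim_Cseq_plus; [apply is_lim_Cseq_plus|]; eassumption.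
Qed.

Lemma K3_converges_at_integer (n : Z) : K3_converges_at (IZR n).
Proof.
  assert (Hnat : forall k : nat, K3_converges_at (IZR (Z.of_nat k)) /\ K3_converges_at (IZR (- Z.of_nat k))).
  { induction k as [|k [IH1 IH2]].
    - simpl. split; intros w hw; apply K3_nonint_converges_at_0; auto.
    - rewrite Nat2Z.inj_succ. split.
      + rewrite succ_IZR. apply K3_converges_at_succ; auto. apply is_integer_IZR.
      + replace (IZR (- Z.succ (Z.of_nat k))) with (IZR (- Z.of_nat k) - 1)
          by (rewrite !opp_IZR, succ_IZR; ring).
        apply K3_converges_at_pred; auto. apply is_integer_IZR. }
  destruct (Z_le_gt_dec 0 n).
  - replace n with (Z.of_nat (Z.to_nat n)) by (apply Z2Nat.id; lia). apply Hnat.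
  - replace n with (- Z.of_nat (Z.to_nat (- n)))%Z by (rewrite Z2Nat.id; lia). apply Hnat.
Qed.

Lemma is_lim_Cseq_K3 (m : R) (w : C) : is_integer m -> slit w ->
  is_lim_Cseq (fun k => K3_nonint q (m + step k) w) (K3 q m w).
Proof.
  intros hm hw. destruct hm as [n ->].
  destruct (K3_converges_at_integer n w hw) as [L HL].
  rewrite (K3_integer_limit q (IZR n) w L (is_integer_IZR n) HL). exact HL.
Qed.
End IntegerOrder.

Lemma eq_of_is_lim_Cseq (u v : nat -> C) (A B : C) :
  is_lim_Cseq u A -> is_lim_Cseq v B -> (forall k, (1 <= k)%nat -> u k = v k) -> A = B.
Proof. intros hu hv E. exact (is_lim_Cseq_unique v A B (is_lim_Cseq_ext u v A E hu) hv). Qed.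

Lemma K3_relation_minus (q nu : R) (z : C) : 0 < q < 1 -> slit z ->
  Cminus (Cmult (RtoC (Rpower q (- nu / 2))) (K3 q (nu - 1) z))
         (Cmult (RtoC (Rpower q (nu / 2))) (K3 q (nu + 1) z))
  = Cmult (RtoC (- 2 * (Rpower q (- nu) - Rpower q nu)))
      (Cmult (Cinv (Cmult (RtoC (1 - q ^ 2)) z))
             (K3 q nu (Cmult (RtoC (Rpower q (1 / 2))) z))).
Proof.
  intros hq hz.
  assert (hz1 : slit (Cmult (RtoC (Rpower q (1 / 2))) z)) by (apply slit_scal, hz; apply Rpower_pos).
  destruct (excluded_middle_informative (is_integer nu)) as [hnu|hnu].
  - eapply eq_of_is_lim_Cseq.
    + apply is_lim_Cseq_minus.
      * apply (is_lim_Cseq_coef (fun mu => Rpower q (- mu / 2))); [unfold Rpower; auto_derive; auto|].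
        apply is_lim_Cseq_K3; [auto| exact (is_integer_minus _ _ hnu (is_integer_IZR 1))| auto].
      * apply (is_lim_Cseq_coef (fun mu => Rpower q (mu / 2))); [unfold Rpower; auto_derive; auto|].
        apply is_lim_Cseq_K3; [auto| exact (is_integer_add _ _ hnu (is_integer_IZR 1))| auto].
    + apply (is_lim_Cseq_coef (fun mu => - 2 * (Rpower q (- mu) - Rpower q mu)));
        [unfold Rpower; auto_derive; auto|].
      apply is_lim_Cseq_scal_l, is_lim_Cseq_K3; auto.
    + intros k hk. cbv beta.
      replace (nu - 1 + step k) with (nu + step k - 1) by ring.
      replace (nu + 1 + step k) with (nu + step k + 1) by ring.
      apply K3_nonint_relation_minus; auto. apply not_integer_add_step; auto.
  - assert (hnu1 : ~ is_integer (nu - 1)) by exact (not_integer_minus _ _ hnu (is_integer_IZR 1)).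
    assert (hnu2 : ~ is_integer (nu + 1)) by exact (not_integer_add _ _ hnu (is_integer_IZR 1)).
    rewrite !K3_not_integer by assumption.
    apply K3_nonint_relation_minus; auto.
Qed.

Lemma K3_relation_plus (q nu : R) (z : C) : 0 < q < 1 -> slit z ->
  Cplus (Cmult (RtoC (Rpower q (- nu / 2))) (K3 q (nu - 1) z))
        (Cmult (RtoC (Rpower q (nu / 2))) (K3 q (nu + 1) z))
  = Cplus
      (Cmult (RtoC (- 4))
        (Cmult (Cinv (Cmult (RtoC (1 - q ^ 2)) z))
               (K3 q nu (Cmult (RtoC (Rpower q (- 1 / 2))) z))))
      (Cmult (RtoC (2 * (Rpower q (- nu) + Rpower q nu)))
        (Cmult (Cinv (Cmult (RtoC (1 - q ^ 2)) z))
               (K3 q nu (Cmult (RtoC (Rpower q (1 / 2))) z)))).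
Proof.
  intros hq hz.
  assert (hz1 : slit (Cmult (RtoC (Rpower q (1 / 2))) z)) by (apply slit_scal, hz; apply Rpower_pos).
  assert (hz2 : slit (Cmult (RtoC (Rpower q (- 1 / 2))) z))
    by (apply slit_scal, hz; apply Rpower_pos).
  destruct (excluded_middle_informative (is_integer nu)) as [hnu|hnu].
  - eapply eq_of_is_lim_Cseq.
    + apply is_lim_Cseq_plus.
      * apply (is_lim_Cseq_coef (fun mu => Rpower q (- mu / 2))); [unfold Rpower; auto_derive; auto|].
        apply is_lim_Cseq_K3; [auto| exact (is_integer_minus _ _ hnu (is_integer_IZR 1))| auto].
      * apply (is_lim_Cseq_coef (fun mu => Rpower q (mu / 2))); [unfold Rpower; auto_derive; auto|].
        apply is_lim_Cseq_K3; [auto| exact (is_integer_add _ _ hnu (is_integer_IZR 1))| auto].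
    + apply is_lim_Cseq_plus.
      * apply is_lim_Cseq_scal_l, is_lim_Cseq_scal_l, is_lim_Cseq_K3; auto.
      * apply (is_lim_Cseq_coef (fun mu => 2 * (Rpower q (- mu) + Rpower q mu)));
          [unfold Rpower; auto_derive; auto|].
        apply is_lim_Cseq_scal_l, is_lim_Cseq_K3; auto.
    + intros k hk. cbv beta.
      replace (nu - 1 + step k) with (nu + step k - 1) by ring.
      replace (nu + 1 + step k) with (nu + step k + 1) by ring.
      apply K3_nonint_relation_plus; auto. apply not_integer_add_step; auto.
  - assert (hnu1 : ~ is_integer (nu - 1)) by exact (not_integer_minus _ _ hnu (is_integer_IZR 1)).
    assert (hnu2 : ~ is_integer (nu + 1)) by exact (not_integer_add _ _ hnu (is_integer_IZR 1)).
    rewrite !K3_not_integer by assumption.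
    apply K3_nonint_relation_plus; auto.
Qed.

Theorem proposition3p2 (q nu : R) (z : C)
  (hq0 : 0 < q) (hq1 : q < 1) (hz : ~ (Im z = 0 /\ Re z <= 0)) :
  Cminus (Cmult (RtoC (Rpower q (- nu / 2))) (K3 q (nu - 1) z))
         (Cmult (RtoC (Rpower q (nu / 2))) (K3 q (nu + 1) z))
  = Cmult (RtoC (- 2 * (Rpower q (- nu) - Rpower q nu)))
      (Cmult (Cinv (Cmult (RtoC (1 - q ^ 2)) z))
             (K3 q nu (Cmult (RtoC (Rpower q (1 / 2))) z)))
  /\
  Cplus (Cmult (RtoC (Rpower q (- nu / 2))) (K3 q (nu - 1) z))
        (Cmult (RtoC (Rpower q (nu / 2))) (K3 q (nu + 1) z))
  = Cplus
      (Cmult (RtoC (- 4))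
        (Cmult (Cinv (Cmult (RtoC (1 - q ^ 2)) z))
               (K3 q nu (Cmult (RtoC (Rpower q (- 1 / 2))) z))))
      (Cmult (RtoC (2 * (Rpower q (- nu) + Rpower q nu)))
        (Cmult (Cinv (Cmult (RtoC (1 - q ^ 2)) z))
               (K3 q nu (Cmult (RtoC (Rpower q (1 / 2))) z)))).
Proof.
  assert (hq : 0 < q < 1) by lra.
  split; [apply K3_relation_minus| apply K3_relation_plus]; assumption.
Qed.
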